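(* Let $(X,d)$ be a compact pointed metric space such that $\mathrm{lip}_0(X)$ separates points uniformly, let $((x_n,y_n))_{n=1}^\infty$ be a sequence of distinct points in $\widetilde X$, let $T$ be its Lipschitz interpolating operator, and let $M\geq 1$. The following statements are equivalent: (i) $((x_n,y_n))_{n=1}^\infty$ is Lipschitz interpolating for $\mathrm{Lip}_0(X)$ and its Lipschitz interpolation constant is $M$. (ii) The operator $S:\ell_1\to\mathcal F(X)$ defined by $S(e_n)=m_{x_n,y_n}$ (i.e. $S(\lambda)=\sum_n\lambda_n m_{x_n,y_n}$) is an into isomorphism and $\frac1M=\max\{J>0: J\|\lambda\|_1\le\|S(\lambda)\|\ \forall\lambda\in\ell_1\}$. (iii) $((x_n,y_n))_{n=1}^\infty$ is Lipschitz $c_0$-interpolating for $\mathrm{lip}_0(X)$, i.e. for every $\alpha\in c_0$ there is $f\in\mathrm{lip}_0(X)$ with $T(f)=\alpha$, and $M=\inf\{K>0: \forall\alpha\in c_0,\ \|\alpha\|_\infty\le1,\ \exists f\in\mathrm{lip}_0(X),\ \|f\|\le K,\ T(f)=\alpha\}$. (iv) $M=\inf\{K>0: \forall \alpha\in c_0,\ \|\alpha\|_\infty\le 1,\ \exists f\in\mathrm{Lip}_0(X),\ \|f\|\le K,\ T(f)=\alpha\}$ (and in particular this set of constants is nonempty).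
   Context: All spaces are real. $(X,d)$ has a base point $0$, $\widetilde{X}=\{(x,y)\in X\times X: x\neq y\}$. $\mathrm{Lip}_0(X)$ is the Banach space of Lipschitz $f:X\to\mathbb{R}$ with $f(0)=0$, normed by $\|f\|=\sup_{(x,y)\in\widetilde X}|f(x)-f(y)|/d(x,y)$. $\mathrm{lip}_0(X)$ is the closed subspace of those $f$ such that for every $\varepsilon>0$ there is $\delta>0$ with $|f(x)-f(y)|/d(x,y)<\varepsilon$ whenever $0<d(x,y)<\delta$. $\mathrm{lip}_0(X)$ separates points uniformly if there is a constant $a>1$ such that for all $x,y\in X$ some $f\in\mathrm{lip}_0(X)$ has $\|f\|\le a$ and $|f(x)-f(y)|=d(x,y)$. For $x\in X$, $\delta_x\in\mathrm{Lip}_0(X)^*$ is $\delta_x(f)=f(x)$; $\mathcal F(X)$ is the closed linear span of $\{\delta_x\}$ in $\mathrm{Lip}_0(X)^*$; $m_{x,y}=(\delta_x-\delta_y)/d(x,y)$. $e_n$ are the unit vectors of $\ell_1$. The Lipschitz interpolating operator of the sequence is $T(f)=\big((f(x_n)-f(y_n))/d(x_n,y_n)\big)_{n}$ for $f\in\mathrm{Lip}_0(X)$. The sequence is Lipschitz interpolating for $\mathrm{Lip}_0(X)$ if $T:\mathrm{Lip}_0(X)\to\ell_\infty$ is surjective, and then its Lipschitz interpolation constant is $\inf\{K\geq1:\forall\alpha\in\ell_\infty,\|\alpha\|_\infty\le1,\ \exists f\in\mathrm{Lip}_0(X),\ \|f\|\le K,\ T(f)=\alpha\}$. *)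

From Stdlib Require Import Reals Lra.
From Coquelicot Require Import Coquelicot.
Open Scope R_scope.

Section Defs.
Context {X : Type} (d : X -> X -> R).

Definition is_metric : Prop :=
  (forall x y, 0 <= d x y) /\
  (forall x y, d x y = 0 <-> x = y) /\
  (forall x y, d x y = d y x) /\
  (forall x y z, d x z <= d x y + d y z).

Definition mopen (U : X -> Prop) : Prop :=
  forall x, U x -> exists r, 0 < r /\ forall y, d x y < r -> U y.

Definition mcompact : Prop :=
  forall (I : Type) (U : I -> X -> Prop),
    (forall i, mopen (U i)) -> (forall x, exists i, U i x) ->
    exists l : list I, forall x, exists i, List.In i l /\ U i x.

Definition lipnorm_le (f : X -> R) (K : R) : Prop :=
  forall x y, x <> y -> Rabs (f x - f y) / d x y <= K.

Definition Lip0 (x0 : X) (f : X -> R) : Prop :=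
  f x0 = 0 /\ exists L, lipnorm_le f L.

Definition lip0 (x0 : X) (f : X -> R) : Prop :=
  Lip0 x0 f /\
  forall eps, 0 < eps -> exists delta, 0 < delta /\
    forall x y, 0 < d x y < delta -> Rabs (f x - f y) / d x y < eps.

Definition separates_uniformly (x0 : X) : Prop :=
  exists a, 1 < a /\ forall x y, exists f, lip0 x0 f /\ lipnorm_le f a /\
    Rabs (f x - f y) = d x y.

Definition Tinterp (xs ys : nat -> X) (f : X -> R) : nat -> R :=
  fun n => (f (xs n) - f (ys n)) / d (xs n) (ys n).

Definition dual_norm (x0 : X) (phi : (X -> R) -> R) : Rbar :=
  Lub_Rbar (fun r => exists f, Lip0 x0 f /\ lipnorm_le f 1 /\ r = Rabs (phi f)).

(** S(lambda) = sum_n lambda_n m_{x_n,y_n}, acting on f as sum_n lambda_n T(f)_n *)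
Definition S_op (xs ys : nat -> X) (lam : nat -> R) : (X -> R) -> R :=
  fun f => Series (fun n => lam n * Tinterp xs ys f n).

End Defs.

Definition in_linf (a : nat -> R) : Prop := exists B, forall n, Rabs (a n) <= B.
Definition in_c0 (a : nat -> R) : Prop := is_lim_seq a 0.
Definition in_l1 (a : nat -> R) : Prop := ex_series (fun n => Rabs (a n)).
Definition l1norm (a : nat -> R) : R := Series (fun n => Rabs (a n)).
Definition sup_le1 (a : nat -> R) : Prop := forall n, Rabs (a n) <= 1.

Definition is_inf (E : R -> Prop) (m : R) : Prop :=
  (forall x, E x -> m <= x) /\ (forall b, (forall x, E x -> b <= x) -> b <= m).
Definition is_max (E : R -> Prop) (m : R) : Prop :=
  E m /\ forall x, E x -> x <= m.

(** All four conditions are compared with the lower bounds [J]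
    of [S] on [l_1], and the best such bound is attained.

    A lower bound [J] makes every closed chain that alternates free moves in [X] (priced at
    [1/J] per unit length) with jumps across pairs (priced by the prescribed slopes [alpha])
    have nonnegative cost. The least cost of a chain from the base point is therefore a
    [1/J]-Lipschitz function interpolating [alpha]: a McShane-type formula in place of
    Hahn-Banach. Conversely, testing [S lam] against an interpolant of the signs of [lam]
    turns a [c_0]-interpolation constant [K] into the lower bound [1/K].

    For [lip_0], compactness and the lower bound force [d(x_n, y_n) -> 0], so [T] maps [lip_0]
    into [c_0]. Uniform separation and compactness give little Lipschitz uniform approximants
    of a Lipschitz interpolant, with a worse constant; taken at a decreasing sequence of
    scales and averaged, they keep the constant close to [1/J] and the interpolation error
    small, and a geometric series of such corrections interpolates exactly. *)

From Stdlib Require Import Reals Lra Lia List Classical ClassicalEpsilon FunctionalExtensionality.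
From Coquelicot Require Import Coquelicot.
Open Scope R_scope.
Set Bullet Behavior "Strict Subproofs".

Lemma Rabs_sub_le x y : Rabs (x - y) <= Rabs x + Rabs y.
Proof. unfold Rminus. rewrite <- (Rabs_Ropp y). apply Rabs_triang. Qed.

Lemma le_of_le_plus_eps a b : (forall eps, 0 < eps -> a <= b + eps) -> a <= b.
Proof.
  intros H. apply Rnot_lt_le. intros Hlt. specialize (H ((a - b) / 2) ltac:(lra)). lra.
Qed.

Lemma le_mult_of_le_mult_plus_eps l M D :
  0 < M -> 0 <= l -> (forall eps, 0 < eps -> l <= (M + eps) * D) -> l <= M * D.
Proof.
  intros HM Hl H.
  assert (HD : 0 <= D).
  { apply Rnot_lt_le. intros HD. specialize (H 1 Rlt_0_1).
    assert (0 < (M + 1) * - D) by (apply Rmult_lt_0_compat; lra). lra. }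
  apply le_of_le_plus_eps. intros eps Heps.
  specialize (H (eps / (D + 1)) ltac:(apply Rdiv_lt_0_compat; lra)).
  assert (D / (D + 1) <= 1) by (apply (Rdiv_le_1 D (D + 1)); lra).
  replace ((M + eps / (D + 1)) * D) with (M * D + eps * (D / (D + 1))) in H by (field; lra).
  nra.
Qed.

Lemma nat_inv_small A eps : 0 < eps -> exists K, A / INR (S K) <= eps.
Proof.
  intros Heps. destruct (INR_unbounded (A / eps)) as [K HK]. exists K.
  assert (HSK : INR K < INR (S K)) by (apply lt_INR; lia). pose proof (pos_INR K).
  apply Rle_div_l; [lra|]. apply Rmult_gt_compat_r with (r := eps) in HK; [|lra].
  unfold Rdiv in HK. rewrite Rmult_assoc, Rinv_l, Rmult_1_r in HK by lra. nra.
Qed.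

Lemma quotient_diff_le A B p q r e : 0 < r -> r <= p -> r <= q -> Rabs B <= q ->
  Rabs (A - B) <= e -> Rabs (p - q) <= e -> Rabs (A / p - B / q) <= 2 * e / r.
Proof.
  intros Hr Hp Hq HB HAB Hpq.
  replace (A / p - B / q) with (((A - B) + B * (q - p) / q) / p) by (field; lra).
  assert (Hcorr : Rabs (B * (q - p) / q) <= e).
  { rewrite Rabs_div, Rabs_mult, (Rabs_right q) by lra. apply Rle_div_l; [lra|].
    rewrite Rabs_minus_sym in Hpq. pose proof (Rabs_pos B). pose proof (Rabs_pos (q - p)). nra. }
  assert (Hnum : Rabs (A - B + B * (q - p) / q) <= 2 * e)
    by (eapply Rle_trans; [apply Rabs_triang|lra]).
  rewrite Rabs_div, (Rabs_right p) by lra. unfold Rdiv.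
  apply Rle_trans with (2 * e * / p).
  - apply Rmult_le_compat_r; [left; apply Rinv_0_lt_compat|]; lra.
  - apply Rmult_le_compat_l; [pose proof (Rabs_pos (A - B)); lra|]. apply Rinv_le_contravar; lra.
Qed.

Lemma sum_n_Rsucc (a : nat -> R) N : sum_n a (S N) = sum_n a N + a (S N).
Proof. rewrite sum_Sn. reflexivity. Qed.

Lemma sum_n_Rext_loc (a b : nat -> R) N :
  (forall n, (n <= N)%nat -> a n = b n) -> sum_n a N = sum_n b N.
Proof. apply sum_n_ext_loc. Qed.

Lemma sum_n_Rabs_le (u v : nat -> R) N :
  (forall m, Rabs (u m) <= v m) -> Rabs (sum_n u N) <= sum_n v N.
Proof.
  intros Huv. induction N as [|N IH].
  - rewrite !sum_O. apply Huv.
  - rewrite !sum_n_Rsucc. eapply Rle_trans; [apply Rabs_triang|].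
    specialize (Huv (S N)). lra.
Qed.

Lemma sum_n_Rmult_l c (u : nat -> R) N : sum_n (fun m => c * u m) N = c * sum_n u N.
Proof. apply (sum_n_mult_l c u N). Qed.

Lemma sum_n_Rminus (u v : nat -> R) N : sum_n (fun m => u m - v m) N = sum_n u N - sum_n v N.
Proof.
  induction N as [|N IH].
  - now rewrite !sum_O.
  - rewrite !sum_n_Rsucc, IH. simpl. ring.
Qed.

Lemma sum_n_indicator n c N :
  sum_n (fun m => if Nat.eq_dec m n then c else 0) N = if Compare_dec.le_dec n N then c else 0.
Proof.
  induction N as [|N IH].
  - rewrite sum_O. destruct (Nat.eq_dec 0 n), (Compare_dec.le_dec n 0); auto; lia.
  - rewrite sum_n_Rsucc, IH.
    destruct (Nat.eq_dec (S N) n), (Compare_dec.le_dec n N), (Compare_dec.le_dec n (S N));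
      try lia; simpl; ring.
Qed.

(* For fixed [t], decreasing scales with [D (S i) <= del i] leave at most one index [i] with
   neither [D i <= t] nor [t < del i]; only that index may violate the bound [G]. *)
Lemma sum_n_one_exception (s D del : nat -> R) t G B :
  G <= B -> (forall i, D (S i) <= D i /\ D (S i) <= del i) ->
  (forall i, D i <= t \/ t < del i -> s i <= G) -> (forall i, s i <= B) ->
  forall K, sum_n s K <= INR (S K) * G + (B - G).
Proof.
  intros HGB HD Hgood Hbad.
  assert (Hstrong : forall K, sum_n s K <=
            INR (S K) * G + (if Rlt_dec t (D (S K)) then 0 else B - G)).
  { induction K as [|K IH].
    - rewrite sum_O, Rmult_1_l. destruct (Rlt_dec t (D 1%nat)) as [Ht|Ht].
      + assert (s 0%nat <= G) by (apply Hgood; right; pose proof (HD 0%nat); lra). lra.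
      + specialize (Hbad 0%nat). lra.
    - rewrite sum_n_Rsucc, S_INR.
      destruct (HD (S K)) as [HD1 HD2]. destruct (Rlt_dec t (D (S K))) as [Ht1|Ht1];
        destruct (Rlt_dec t (D (S (S K)))) as [Ht2|Ht2].
      + assert (s (S K) <= G) by (apply Hgood; right; lra). lra.
      + specialize (Hbad (S K)). lra.
      + lra.
      + assert (s (S K) <= G) by (apply Hgood; left; lra). lra. }
  intros K. specialize (Hstrong K). destruct (Rlt_dec t (D (S K))); lra.
Qed.

Lemma sum_n_eventually_const (a : nat -> R) N :
  (forall m, (N < m)%nat -> a m = 0) -> forall n, (N <= n)%nat -> sum_n a n = sum_n a N.
Proof.
  intros Ha n Hn. induction n as [|n IH].
  - now replace N with 0%nat by lia.
  - destruct (Nat.eq_dec N (S n)) as [<-|HN]; [reflexivity|].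
    rewrite sum_n_Rsucc, IH, Ha by lia. apply Rplus_0_r.
Qed.

Lemma is_series_finite (a : nat -> R) N :
  (forall m, (N < m)%nat -> a m = 0) -> is_series a (sum_n a N).
Proof.
  intros Ha. enough (H : is_lim_seq (sum_n a) (sum_n a N)) by exact H.
  apply (is_lim_seq_ext_loc (fun _ => sum_n a N)).
  - exists N. intros n Hn. symmetry. now apply sum_n_eventually_const.
  - apply is_lim_seq_const.
Qed.

Lemma Series_finite (a : nat -> R) N :
  (forall m, (N < m)%nat -> a m = 0) -> Series a = sum_n a N.
Proof. intros Ha. apply is_series_unique, (is_series_finite a N Ha). Qed.

Lemma ex_series_finite (a : nat -> R) N :
  (forall m, (N < m)%nat -> a m = 0) -> ex_series a.
Proof. intros Ha. eexists. apply (is_series_finite a N Ha). Qed.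

Lemma is_series_telescoping (u : nat -> R) :
  is_lim_seq u 0 -> is_series (fun k => u k - u (S k)) (u 0%nat).
Proof.
  intros Hu. enough (H : is_lim_seq (sum_n (fun k => u k - u (S k))) (u 0%nat)) by exact H.
  apply (is_lim_seq_ext (fun N => u 0%nat - u (S N))).
  - induction n as [|n IH].
    + now rewrite sum_O.
    + rewrite sum_n_Rsucc, <- IH. simpl. ring.
  - replace (Finite (u 0%nat)) with (Finite (u 0%nat - 0)) by (f_equal; ring).
    apply is_lim_seq_minus'; [apply is_lim_seq_const|].
    now apply (is_lim_seq_incr_1 u 0).
Qed.

Lemma geometric_domination (a : nat -> R) q B :
  0 <= q < 1 -> (forall k, Rabs (a k) <= q ^ k * B) ->
  ex_series a /\ Rabs (Series a) <= B / (1 - q).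
Proof.
  intros Hq Ha.
  assert (Hgeom : ex_series (fun k => q ^ k * B)).
  { apply ex_series_scal_r, ex_series_geom. rewrite Rabs_right; lra. }
  assert (Habs : ex_series (fun k => Rabs (a k))).
  { apply (ex_series_le (fun k => Rabs (a k)) (fun k => q ^ k * B)); auto.
    intros k. change (Rabs (Rabs (a k)) <= q ^ k * B). now rewrite Rabs_Rabsolu. }
  split; [now apply ex_series_Rabs|].
  eapply Rle_trans; [now apply Series_Rabs|].
  eapply Rle_trans; [apply Series_le; [|exact Hgeom]|].
  - intros k. split; [apply Rabs_pos|apply Ha].
  - rewrite Series_scal_r, Series_geom by (rewrite Rabs_right; lra). right; field. lra.
Qed.

Lemma finite_prefix_bounded (a : nat -> R) N : exists B, forall n, (n <= N)%nat -> Rabs (a n) <= B.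
Proof.
  induction N as [|N [B HB]].
  - exists (Rabs (a 0%nat)). intros n Hn. replace n with 0%nat by lia. lra.
  - exists (Rmax B (Rabs (a (S N)))). intros n Hn.
    destruct (Nat.eq_dec n (S N)) as [->|Hn']; [apply Rmax_r|].
    eapply Rle_trans; [apply HB; lia|apply Rmax_l].
Qed.

Lemma finite_prefix_lower_pos (a : nat -> R) N :
  (forall n, 0 < a n) -> exists r, 0 < r /\ forall n, (n < N)%nat -> r <= a n.
Proof.
  intros Ha. induction N as [|N [r [Hr HN]]].
  - exists 1. split; [lra|]. intros; lia.
  - exists (Rmin r (a N)). split; [now apply Rmin_pos|]. intros n Hn.
    destruct (Nat.eq_dec n N) as [->|Hn']; [apply Rmin_r|].
    eapply Rle_trans; [apply Rmin_l|]. apply HN. lia.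
Qed.

Lemma c0_bounded a : in_c0 a -> exists B, 0 < B /\ forall n, Rabs (a n) <= B.
Proof.
  intros Ha. destruct (proj2 (is_lim_seq_spec _ _) Ha (mkposreal 1 Rlt_0_1)) as [N HN].
  destruct (finite_prefix_bounded a N) as [B HB].
  exists (Rmax B 1). split; [eapply Rlt_le_trans; [apply Rlt_0_1|apply Rmax_r]|].
  intros n. destruct (Compare_dec.le_dec n N) as [Hn|Hn].
  - eapply Rle_trans; [apply HB, Hn|apply Rmax_l].
  - specialize (HN n ltac:(lia)). simpl in HN. rewrite Rminus_0_r in HN.
    pose proof (Rmax_r B 1). lra.
Qed.

Lemma infinitely_often_injective (P : nat -> Prop) :
  (forall N, exists n, (N <= n)%nat /\ P n) ->
  exists psi : nat -> nat, (forall k, P (psi k)) /\ forall k k', psi k = psi k' -> k = k'.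
Proof.
  intros HP. destruct (choice _ HP) as [phi Hphi].
  set (psi := fix psi k := match k with O => phi O | S k' => phi (S (psi k')) end).
  assert (Hstep : forall k, (psi k < psi (S k))%nat) by (intros k; apply (proj1 (Hphi (S (psi k))))).
  assert (Hmono : forall k k', (k < k')%nat -> (psi k < psi k')%nat).
  { intros k k' Hk. induction Hk as [|k' Hk IH]; [apply Hstep|]. specialize (Hstep k'). lia. }
  exists psi. split.
  - intros [|k]; apply Hphi.
  - intros k k' E. destruct (Nat.lt_total k k') as [Hk|[Hk|Hk]]; [|exact Hk|];
      apply Hmono in Hk; lia.
Qed.

Definition unit_diff n m j := (if Nat.eq_dec j n then 1 else 0) - (if Nat.eq_dec j m then 1 else 0).

Lemma unit_diff_vanish n m j : (Nat.max n m < j)%nat -> unit_diff n m j = 0.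
Proof. intros Hj. unfold unit_diff. destruct (Nat.eq_dec j n), (Nat.eq_dec j m); lia || ring. Qed.

Lemma unit_diff_series n m t : Series (fun j => unit_diff n m j * t j) = t n - t m.
Proof.
  rewrite (Series_finite _ (Nat.max n m)) by (intros j Hj; rewrite unit_diff_vanish by exact Hj; ring).
  rewrite (sum_n_Rext_loc _ (fun j => (if Nat.eq_dec j n then t n else 0)
                                       - (if Nat.eq_dec j m then t m else 0)))
    by (intros j _; unfold unit_diff; destruct (Nat.eq_dec j n), (Nat.eq_dec j m); subst; ring).
  rewrite sum_n_Rminus, !sum_n_indicator.
  destruct (Compare_dec.le_dec n (Nat.max n m)), (Compare_dec.le_dec m (Nat.max n m)); lia || ring.
Qed.

Lemma unit_diff_l1 n m : n <> m -> in_l1 (unit_diff n m) /\ l1norm (unit_diff n m) = 2.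
Proof.
  intros Hnm.
  assert (Habs : forall j, Rabs (unit_diff n m j) =
            (if Nat.eq_dec j n then 1 else 0) - (if Nat.eq_dec j m then -1 else 0)).
  { intros j. unfold unit_diff. destruct (Nat.eq_dec j n), (Nat.eq_dec j m); subst; try lia.
    - rewrite Rminus_0_r, Rabs_R1. ring.
    - rewrite Rminus_0_l, Rabs_Ropp, Rabs_R1. ring.
    - rewrite Rminus_0_r, Rabs_R0. ring. }
  assert (Hvanish : forall j, (Nat.max n m < j)%nat -> Rabs (unit_diff n m j) = 0)
    by (intros j Hj; rewrite unit_diff_vanish by exact Hj; apply Rabs_R0).
  split; [now apply (ex_series_finite _ (Nat.max n m))|].
  unfold l1norm. rewrite (Series_finite _ (Nat.max n m)) by exact Hvanish.
  rewrite (sum_n_Rext_loc _ _ _ (fun j _ => Habs j)), sum_n_Rminus, !sum_n_indicator.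
  destruct (Compare_dec.le_dec n (Nat.max n m)), (Compare_dec.le_dec m (Nat.max n m)); lia || ring.
Qed.

Lemma l1norm_nonneg lam : in_l1 lam -> 0 <= l1norm lam.
Proof.
  intros Hlam. unfold l1norm.
  replace 0 with (Series (fun _ => 0)) by (rewrite (Series_finite _ 0) by auto; now rewrite sum_O).
  apply Series_le; [intros; split; [lra|apply Rabs_pos]|exact Hlam].
Qed.

Lemma l1norm_le_of_partial lam B : in_l1 lam ->
  (forall N, sum_n (fun m => Rabs (lam m)) N <= B) -> l1norm lam <= B.
Proof.
  intros Hlam HB.
  enough (H : Rbar_le (l1norm lam) B) by exact H.
  apply (is_lim_seq_le (sum_n (fun m => Rabs (lam m))) (fun _ => B));
    [exact HB| |apply is_lim_seq_const].
  apply (Series_correct _ Hlam).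
Qed.

Definition sign_trunc (lam : nat -> R) N m :=
  if Compare_dec.le_dec m N then (if Rle_dec 0 (lam m) then 1 else -1) else 0.

Lemma sign_trunc_mul lam N m :
  lam m * sign_trunc lam N m = if Compare_dec.le_dec m N then Rabs (lam m) else 0.
Proof.
  unfold sign_trunc. destruct (Compare_dec.le_dec m N); [|ring].
  destruct (Rle_dec 0 (lam m)); [rewrite Rabs_right|rewrite Rabs_left]; lra.
Qed.

Lemma Glb_Rbar_real (E : R -> Prop) (lb e : R) :
  E e -> (forall x, E x -> lb <= x) ->
  (forall x, E x -> real (Glb_Rbar E) <= x) /\
  (forall b, (forall x, E x -> b <= x) -> b <= real (Glb_Rbar E)).
Proof.
  intros He Hlb. destruct (Glb_Rbar_correct E) as [Hlow Hgreat].
  assert (H1 : Rbar_le lb (Glb_Rbar E)) by (apply Hgreat; intros x Hx; now apply Hlb).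
  assert (H2 : Rbar_le (Glb_Rbar E) e) by now apply Hlow.
  destruct (Glb_Rbar E) as [l| |]; simpl in *; try contradiction.
  split.
  - intros x Hx. exact (Hlow x Hx).
  - intros b Hb. apply (Hgreat (Finite b)). intros x Hx. now apply Hb.
Qed.

Lemma is_inf_approx (E : R -> Prop) M eps : is_inf E M -> 0 < eps -> exists K, E K /\ K < M + eps.
Proof.
  intros [_ Hgreat] Heps. apply NNPP. intros Hno.
  enough (M + eps <= M) by lra. apply Hgreat. intros K HK.
  apply Rnot_lt_le. intros HKlt. apply Hno. now exists K.
Qed.

Lemma is_inf_ext (E E' : R -> Prop) M : (forall K, E K <-> E' K) -> is_inf E M -> is_inf E' M.
Proof.
  intros HE [Hlow Hgreat]. split.
  - intros K HK. now apply Hlow, HE.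
  - intros b Hb. apply Hgreat. intros K HK. now apply Hb, HE.
Qed.

Lemma is_inf_dense_subset (E E' : R -> Prop) M : (forall K, E K -> E' K) ->
  (forall K K', E' K -> K < K' -> E K') -> (is_inf E M <-> is_inf E' M).
Proof.
  intros Hsub Hdense. split; intros [Hlow Hgreat]; split.
  - intros K HK. apply le_of_le_plus_eps. intros eps Heps. apply Hlow, (Hdense K); [exact HK|lra].
  - intros b Hb. apply Hgreat. intros K HK. now apply Hb, Hsub.
  - intros K HK. now apply Hlow, Hsub.
  - intros b Hb. apply Hgreat. intros K HK. apply le_of_le_plus_eps. intros eps Heps.
    apply Hb, (Hdense K); [exact HK|lra].
Qed.

(** * Lipschitz and little Lipschitz functions *)

Section Metric.
Variables (X : Type) (d : X -> X -> R) (x0 : X).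
Hypothesis Hd : is_metric d.

Lemma dist_nonneg u v : 0 <= d u v. Proof. apply Hd. Qed.
Lemma dist_refl u : d u u = 0. Proof. now apply Hd. Qed.
Lemma dist_sym u v : d u v = d v u. Proof. apply Hd. Qed.
Lemma dist_triangle u v w : d u w <= d u v + d v w. Proof. apply Hd. Qed.

Lemma dist_pos u v : u <> v -> 0 < d u v.
Proof.
  intros Huv. destruct (Rle_lt_or_eq_dec 0 (d u v) (dist_nonneg u v)) as [H|H]; [exact H|].
  exfalso. apply Huv. now apply Hd.
Qed.

Definition lipschitz_with (g : X -> R) (K : R) := forall u v, Rabs (g u - g v) <= K * d u v.

Definition little_lipschitz (g : X -> R) := forall eps, 0 < eps -> exists delta, 0 < delta /\
  forall u v, d u v < delta -> Rabs (g u - g v) <= eps * d u v.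

Lemma lipnorm_le_iff g K : lipnorm_le d g K <-> lipschitz_with g K.
Proof.
  split.
  - intros Hg u v. destruct (classic (u = v)) as [<-|Huv].
    + rewrite Rminus_eq_0, Rabs_R0, dist_refl. lra.
    + apply Rle_div_l; [now apply dist_pos|]. now apply Hg.
  - intros Hg u v Huv. apply Rle_div_l; [now apply dist_pos|]. apply Hg.
Qed.

Lemma lip0_iff g :
  lip0 d x0 g <-> g x0 = 0 /\ (exists K, lipschitz_with g K) /\ little_lipschitz g.
Proof.
  split.
  - intros [[Hg0 [K HK]] Hlittle]. split; [exact Hg0|split].
    + exists K. now apply lipnorm_le_iff.
    + intros eps Heps. destruct (Hlittle eps Heps) as [delta [Hdelta H]].
      exists delta. split; [exact Hdelta|]. intros u v Huv.
      destruct (classic (u = v)) as [<-|Hneq].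
      * rewrite Rminus_eq_0, Rabs_R0, dist_refl. lra.
      * assert (Hpos : 0 < d u v) by now apply dist_pos.
        apply Rle_div_l; [exact Hpos|]. left. now apply H.
  - intros [Hg0 [[K HK] Hlittle]]. split; [split; [exact Hg0|exists K; now apply lipnorm_le_iff]|].
    intros eps Heps. destruct (Hlittle (eps / 2) ltac:(lra)) as [delta [Hdelta H]].
    exists delta. split; [exact Hdelta|]. intros u v [Hpos Huv].
    apply Rle_lt_trans with (eps / 2); [|lra]. apply Rle_div_l; [exact Hpos|]. now apply H.
Qed.

Lemma lipschitz_with_le g K K' : K <= K' -> lipschitz_with g K -> lipschitz_with g K'.
Proof. intros HK Hg u v. specialize (Hg u v). pose proof (dist_nonneg u v). nra. Qed.

Lemma lipschitz_with_scale g K c :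
  lipschitz_with g K -> lipschitz_with (fun u => c * g u) (Rabs c * K).
Proof.
  intros Hg u v. replace (c * g u - c * g v) with (c * (g u - g v)) by ring.
  rewrite Rabs_mult. pose proof (Rabs_pos c). specialize (Hg u v). nra.
Qed.

Lemma Lip0_scale f c : Lip0 d x0 f -> Lip0 d x0 (fun u => c * f u).
Proof.
  intros [Hf0 [K HK]]. split; [rewrite Hf0; ring|].
  exists (Rabs c * K). now apply lipnorm_le_iff, lipschitz_with_scale, lipnorm_le_iff.
Qed.

Lemma lipschitz_with_const c K : 0 <= K -> lipschitz_with (fun _ => c) K.
Proof.
  intros HK u v. rewrite Rminus_eq_0, Rabs_R0. pose proof (dist_nonneg u v). nra.
Qed.

Lemma little_lipschitz_const c : little_lipschitz (fun _ => c).
Proof.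
  intros eps Heps. exists 1. split; [lra|]. intros u v _.
  rewrite Rminus_eq_0, Rabs_R0. pose proof (dist_nonneg u v). nra.
Qed.

Lemma little_lipschitz_plus g h :
  little_lipschitz g -> little_lipschitz h -> little_lipschitz (fun u => g u + h u).
Proof.
  intros Hg Hh eps Heps.
  destruct (Hg (eps / 2) ltac:(lra)) as [d1 [Hd1 H1]].
  destruct (Hh (eps / 2) ltac:(lra)) as [d2 [Hd2 H2]].
  exists (Rmin d1 d2). split; [now apply Rmin_pos|]. intros u v Huv.
  specialize (H1 u v (Rlt_le_trans _ _ _ Huv (Rmin_l d1 d2))).
  specialize (H2 u v (Rlt_le_trans _ _ _ Huv (Rmin_r d1 d2))).
  replace (g u + h u - (g v + h v)) with ((g u - g v) + (h u - h v)) by ring.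
  eapply Rle_trans; [apply Rabs_triang|]. lra.
Qed.

Lemma little_lipschitz_scale g c : little_lipschitz g -> little_lipschitz (fun u => c * g u).
Proof.
  intros Hg eps Heps. pose proof (Rabs_pos c) as Hc.
  destruct (Hg (eps / (Rabs c + 1)) ltac:(apply Rdiv_lt_0_compat; lra)) as [delta [Hdelta H]].
  exists delta. split; [exact Hdelta|]. intros u v Huv. specialize (H u v Huv).
  replace (c * g u - c * g v) with (c * (g u - g v)) by ring. rewrite Rabs_mult.
  replace (eps * d u v) with ((Rabs c + 1) * (eps / (Rabs c + 1) * d u v)) by (field; lra).
  pose proof (Rabs_pos (g u - g v)). nra.
Qed.

Lemma lip0_scale f c : lip0 d x0 f -> lip0 d x0 (fun u => c * f u).
Proof.
  intros Hf. apply lip0_iff in Hf as [Hf0 [[K HK] Hlittle]]. apply lip0_iff.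
  split; [rewrite Hf0; ring|split].
  - exists (Rabs c * K). now apply lipschitz_with_scale.
  - now apply little_lipschitz_scale.
Qed.

Lemma little_lipschitz_sum_n (g : nat -> X -> R) K :
  (forall i, little_lipschitz (g i)) -> little_lipschitz (fun u => sum_n (fun i => g i u) K).
Proof.
  intros Hg. induction K as [|K IH].
  - intros eps Heps. destruct (Hg 0%nat eps Heps) as [delta [Hdelta H]].
    exists delta. split; [exact Hdelta|]. intros u v Huv. rewrite !sum_O. now apply H.
  - replace (fun u => sum_n (fun i => g i u) (S K))
      with (fun u => sum_n (fun i => g i u) K + g (S K) u)
      by (apply functional_extensionality; intros u; now rewrite sum_n_Rsucc).
    now apply little_lipschitz_plus.
Qed.

(** * Uniform approximation by little Lipschitz functions *)

Definition nonexpansive2 (op : R -> R -> R) := forall a b a' b' e,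
  Rabs (a - a') <= e -> Rabs (b - b') <= e -> Rabs (op a b - op a' b') <= e.

Lemma Rmin_nonexpansive2 : nonexpansive2 Rmin.
Proof.
  intros a b a' b' e. rewrite !Rabs_le_between. intros H1 H2.
  unfold Rmin. destruct (Rle_dec a b), (Rle_dec a' b'); lra.
Qed.

Lemma Rmax_nonexpansive2 : nonexpansive2 Rmax.
Proof.
  intros a b a' b' e. rewrite !Rabs_le_between. intros H1 H2.
  unfold Rmax. destruct (Rle_dec a b), (Rle_dec a' b'); lra.
Qed.

Lemma little_lipschitz_op op g h : nonexpansive2 op ->
  little_lipschitz g -> little_lipschitz h -> little_lipschitz (fun u => op (g u) (h u)).
Proof.
  intros Hop Hg Hh eps Heps.
  destruct (Hg eps Heps) as [d1 [Hd1 H1]]. destruct (Hh eps Heps) as [d2 [Hd2 H2]].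
  exists (Rmin d1 d2). split; [now apply Rmin_pos|]. intros u v Huv. apply Hop.
  - apply H1. exact (Rlt_le_trans _ _ _ Huv (Rmin_l d1 d2)).
  - apply H2. exact (Rlt_le_trans _ _ _ Huv (Rmin_r d1 d2)).
Qed.

Definition fold_op {I : Type} (op : R -> R -> R) (F : I -> X -> R) (base : X -> R) l u :=
  fold_right (fun i acc => op (F i u) acc) (base u) l.

Lemma fold_op_lipschitz {I : Type} op (F : I -> X -> R) base K l : nonexpansive2 op ->
  (forall i, lipschitz_with (F i) K /\ little_lipschitz (F i)) ->
  lipschitz_with base K -> little_lipschitz base ->
  lipschitz_with (fold_op op F base l) K /\ little_lipschitz (fold_op op F base l).
Proof.
  intros Hop HF Hbase Hlittle. unfold fold_op.
  induction l as [|i l [IH1 IH2]]; simpl; [now split|].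
  destruct (HF i) as [HFi1 HFi2]. split.
  - intros u v. now apply Hop.
  - now apply (little_lipschitz_op op (F i) (fun u => fold_right _ (base u) l)).
Qed.

Lemma fold_Rmin_le {I : Type} (F : I -> X -> R) base l u i :
  In i l -> fold_op Rmin F base l u <= F i u.
Proof.
  unfold fold_op. induction l as [|j l IH]; simpl; [tauto|]. intros [->|Hi].
  - apply Rmin_l.
  - eapply Rle_trans; [apply Rmin_r|]. now apply IH.
Qed.

Lemma fold_Rmin_const {I : Type} (F : I -> X -> R) base l u :
  (forall i, F i u = base u) -> fold_op Rmin F base l u = base u.
Proof.
  intros HF. unfold fold_op. induction l as [|j l IH]; simpl; [reflexivity|].
  rewrite IH, HF. apply Rmin_left. lra.
Qed.

Lemma fold_Rmax_ge {I : Type} (F : I -> X -> R) base l u i :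
  In i l -> F i u <= fold_op Rmax F base l u.
Proof.
  unfold fold_op. induction l as [|j l IH]; simpl; [tauto|]. intros [->|Hi].
  - apply Rmax_l.
  - eapply Rle_trans; [now apply IH|apply Rmax_r].
Qed.

Lemma fold_Rmax_le {I : Type} (F : I -> X -> R) base l u b :
  (forall i, F i u <= b) -> base u <= b -> fold_op Rmax F base l u <= b.
Proof.
  intros HF Hb. unfold fold_op. induction l as [|j l IH]; simpl; [exact Hb|].
  now apply Rmax_lub.
Qed.

Lemma lipschitz_lt_open (h k : X -> R) Kh Kk : 0 <= Kh -> 0 <= Kk ->
  lipschitz_with h Kh -> lipschitz_with k Kk -> mopen d (fun u => h u < k u).
Proof.
  intros HKh HKk Hh Hk u Hu. set (gap := k u - h u).
  exists (gap / (Kh + Kk + 1)). split; [apply Rdiv_lt_0_compat; unfold gap; lra|].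
  intros w Hw. specialize (Hh u w). specialize (Hk u w).
  rewrite Rabs_le_between in Hh, Hk. pose proof (dist_nonneg u w).
  assert ((Kh + Kk + 1) * d u w < gap).
  { apply Rlt_le_trans with ((Kh + Kk + 1) * (gap / (Kh + Kk + 1))).
    - apply Rmult_lt_compat_l; lra.
    - right. field. lra. }
  unfold gap in *. nra.
Qed.

Lemma compact_finite_net rho : mcompact d -> 0 < rho ->
  exists l, forall u, exists c, In c l /\ d c u < rho.
Proof.
  intros Hcpt Hrho. apply (Hcpt X (fun c u => d c u < rho)).
  - intros c u Hu. exists (rho - d c u). split; [lra|]. intros w Hw.
    pose proof (dist_triangle c u w). lra.
  - intros u. exists u. now rewrite dist_refl.
Qed.

Lemma compact_close_pair rho (u v : nat -> X) : mcompact d -> 0 < rho ->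
  exists k k', k <> k' /\ d (u k) (u k') < 2 * rho /\ d (v k) (v k') < 2 * rho.
Proof.
  intros Hcpt Hrho. destruct (compact_finite_net rho Hcpt Hrho) as [l Hl].
  destruct (choice _ Hl) as [center Hcenter].
  set (F := fun k => (center (u k), center (v k))).
  assert (Hcollide : exists k k', k <> k' /\ F k = F k').
  { apply NNPP. intros Hno.
    assert (Hnodup : NoDup (map F (seq 0 (length l * length l + 1)))).
    { apply NoDup_map_NoDup_ForallPairs; [|apply seq_NoDup].
      intros k k' _ _ E. apply NNPP. intros Hk. apply Hno. now exists k, k'. }
    apply NoDup_incl_length with (l' := list_prod l l) in Hnodup.
    - rewrite length_map, length_seq, length_prod in Hnodup. lia.
    - intros p Hp. apply in_map_iff in Hp as [k [<- _]]. apply in_prod; apply Hcenter. }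
  destruct Hcollide as [k [k' [Hkk' HF]]]. injection HF as Hu Hv.
  exists k, k'. split; [exact Hkk'|split].
  - pose proof (dist_triangle (u k) (center (u k)) (u k')) as Htri.
    rewrite (dist_sym (u k) (center (u k))) in Htri.
    pose proof (proj2 (Hcenter (u k))). pose proof (proj2 (Hcenter (u k'))). rewrite Hu in *. lra.
  - pose proof (dist_triangle (v k) (center (v k)) (v k')) as Htri.
    rewrite (dist_sym (v k) (center (v k))) in Htri.
    pose proof (proj2 (Hcenter (v k))). pose proof (proj2 (Hcenter (v k'))). rewrite Hv in *. lra.
Qed.

Section Approximation.
Variable sep : R.
Hypothesis Hsep1 : 1 < sep.
Hypothesis Hsep : forall x y, exists f, lip0 d x0 f /\ lipnorm_le d f sep /\ Rabs (f x - f y) = d x y.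
Hypothesis Hcpt : mcompact d.
Variables (f : X -> R) (L : R).
Hypothesis HL : 0 <= L.
Hypothesis Hf : lipschitz_with f L.

Lemma two_point_interp x y : exists h,
  (lipschitz_with h (sep * L) /\ little_lipschitz h) /\ h x = f x /\ h y = f y.
Proof.
  destruct (classic (x = y)) as [<-|Hxy].
  - exists (fun _ => f x). repeat split; [apply lipschitz_with_const; nra|apply little_lipschitz_const].
  - destruct (Hsep x y) as [g [Hg [Hga Hgxy]]].
    apply lip0_iff in Hg as [_ [_ Hglittle]]. apply lipnorm_le_iff in Hga.
    assert (Hgap : g y - g x <> 0).
    { intros E. rewrite Rabs_minus_sym, E, Rabs_R0 in Hgxy.
      pose proof (dist_pos x y Hxy). lra. }
    set (c := (f y - f x) / (g y - g x)).
    assert (Hc : Rabs c <= L).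
    { unfold c. rewrite Rabs_div by exact Hgap. apply Rle_div_l; [now apply Rabs_pos_lt|].
      rewrite Rabs_minus_sym in Hgxy. rewrite Hgxy. specialize (Hf y x). now rewrite dist_sym in Hf. }
    exists (fun u => f x + c * (g u - g x)). split; [split|split].
    + intros u v.
      replace (f x + c * (g u - g x) - (f x + c * (g v - g x))) with (c * (g u - g v)) by ring.
      rewrite Rabs_mult. specialize (Hga u v). pose proof (Rabs_pos c).
      pose proof (Rabs_pos (g u - g v)). pose proof (dist_nonneg u v).
      apply Rle_trans with (Rabs c * (sep * d u v)); [now apply Rmult_le_compat_l|nra].
    + apply (little_lipschitz_plus (fun _ => f x)); [apply little_lipschitz_const|].
      apply little_lipschitz_scale, (little_lipschitz_plus g (fun _ => - g x)); [exact Hglittle|].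
      apply little_lipschitz_const.
    + ring.
    + unfold c. field. exact Hgap.
Qed.

Lemma lip_approx_below_at x eta : 0 < eta -> exists k,
  (lipschitz_with k (sep * L) /\ little_lipschitz k) /\ k x = f x /\ forall u, k u < f u + eta.
Proof.
  intros Heta.
  destruct (choice (fun y h => (lipschitz_with h (sep * L) /\ little_lipschitz h) /\
      h x = f x /\ h y = f y) (two_point_interp x)) as [hy Hhy].
  destruct (Hcpt X (fun y u => hy y u < f u + eta)) as [l Hl].
  - intros y. apply (lipschitz_lt_open _ _ (sep * L) L); [nra|exact HL|apply Hhy|].
    intros u v. replace (f u + eta - (f v + eta)) with (f u - f v) by ring. apply Hf.
  - intros u. exists u. destruct (Hhy u) as [_ [_ ->]]. lra.
  - exists (fold_op Rmin hy (fun _ => f x) l). split; [|split].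
    + apply (fold_op_lipschitz Rmin hy (fun _ => f x));
        [apply Rmin_nonexpansive2|intros y; apply Hhy| |apply little_lipschitz_const].
      apply lipschitz_with_const. nra.
    + apply (fold_Rmin_const hy (fun _ => f x)). intros y. apply Hhy.
    + intros u. destruct (Hl u) as [y [Hy Hu]].
      eapply Rle_lt_trans; [apply (fold_Rmin_le hy (fun _ => f x) l u y Hy)|exact Hu].
Qed.

Lemma lip_uniform_approx eta : f x0 = 0 -> 0 < eta -> exists g, g x0 = 0 /\
  lipschitz_with g (sep * L) /\ little_lipschitz g /\ forall u, Rabs (g u - f u) <= eta.
Proof.
  intros Hf0 Heta.
  destruct (choice _ (fun x => lip_approx_below_at x (eta / 2) ltac:(lra))) as [kx Hkx].
  destruct (Hcpt X (fun x u => f u - eta / 2 < kx x u)) as [l Hl].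
  - intros x. apply (lipschitz_lt_open _ _ L (sep * L)); [exact HL|nra| |apply Hkx].
    intros u v. replace (f u - eta / 2 - (f v - eta / 2)) with (f u - f v) by ring. apply Hf.
  - intros u. exists u. destruct (Hkx u) as [_ [-> _]]. lra.
  - set (k := fold_op Rmax kx (kx x0) l).
    assert (Hk : lipschitz_with k (sep * L) /\ little_lipschitz k)
      by (apply fold_op_lipschitz; try apply Hkx; apply Rmax_nonexpansive2).
    assert (Hup : forall u, k u <= f u + eta / 2)
      by (intros u; apply fold_Rmax_le; intros; left; apply Hkx).
    assert (Hlow : forall u, f u - eta / 2 < k u).
    { intros u. destruct (Hl u) as [x [Hx Hu]].
      eapply Rlt_le_trans; [exact Hu|now apply fold_Rmax_ge]. }
    exists (fun u => k u - k x0). split; [ring|split; [|split]].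
    + intros u v. replace (k u - k x0 - (k v - k x0)) with (k u - k v) by ring. apply Hk.
    + apply (little_lipschitz_plus k (fun _ => - k x0)); [apply Hk|apply little_lipschitz_const].
    + intros u. pose proof (Hup u). pose proof (Hlow u). pose proof (Hup x0). pose proof (Hlow x0).
      rewrite Hf0 in *. apply Rabs_le. lra.
Qed.

Lemma multiscale_approx c sigma r : f x0 = 0 -> 0 < c -> 0 < sigma -> 0 < r ->
  exists (g : nat -> X -> R) (D del : nat -> R),
    (forall i, 0 < D i /\ D i <= r) /\ (forall i, D (S i) <= D i /\ D (S i) <= del i) /\
    (forall i, g i x0 = 0 /\ lipschitz_with (g i) (sep * L) /\ little_lipschitz (g i)) /\
    (forall i u, Rabs (g i u - f u) <= c * D i) /\
    (forall i u v, d u v < del i -> Rabs (g i u - g i v) <= sigma * d u v).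
Proof.
  intros Hf0 Hc Hsigma Hr.
  assert (Hscale : forall D, exists p : (X -> R) * R, 0 < D ->
    0 < snd p /\ fst p x0 = 0 /\ lipschitz_with (fst p) (sep * L) /\ little_lipschitz (fst p) /\
    (forall u, Rabs (fst p u - f u) <= c * D) /\
    (forall u v, d u v < snd p -> Rabs (fst p u - fst p v) <= sigma * d u v)).
  { intros D. destruct (Rlt_dec 0 D) as [HD|HD]; [|exists (f, 0); lra].
    destruct (lip_uniform_approx (c * D) Hf0 ltac:(nra)) as [g [Hg0 [Hglip [Hglittle Hgf]]]].
    destruct (Hglittle sigma Hsigma) as [delta [Hdelta Hsmall]].
    exists (g, delta). intros _. simpl. repeat split; auto. }
  destruct (choice _ Hscale) as [P HP].
  set (D := fix D i := match i with O => r | S i' => Rmin (D i') (snd (P (D i'))) end).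
  assert (HDpos : forall i, 0 < D i).
  { induction i as [|i IH]; simpl; [exact Hr|]. apply Rmin_pos; [exact IH|apply (HP _ IH)]. }
  assert (HDr : forall i, D i <= r).
  { induction i as [|i IH]; simpl; [lra|]. eapply Rle_trans; [apply Rmin_l|exact IH]. }
  exists (fun i => fst (P (D i))), D, (fun i => snd (P (D i))).
  split; [intros i; split; [apply HDpos|apply HDr]|].
  split; [intros i; split; [apply Rmin_l|apply Rmin_r]|].
  repeat split; intros; apply (HP _ (HDpos i)); auto.
Qed.

End Approximation.

Definition average (g : nat -> X -> R) K u := sum_n (fun i => g i u) K / INR (S K).

Lemma average_sub g K u v :
  average g K u - average g K v = sum_n (fun i => g i u - g i v) K / INR (S K).
Proof. unfold average. rewrite sum_n_Rminus. field. apply not_0_INR. lia. Qed.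

Lemma average_base g K : (forall i, g i x0 = 0) -> average g K x0 = 0.
Proof.
  intros Hg. unfold average. rewrite (sum_n_Rext_loc _ (fun _ => 0)) by auto.
  rewrite sum_n_const. unfold Rdiv. ring.
Qed.

Lemma average_little g K : (forall i, little_lipschitz (g i)) -> little_lipschitz (average g K).
Proof.
  intros Hg. replace (average g K) with (fun u => / INR (S K) * sum_n (fun i => g i u) K)
    by (apply functional_extensionality; intros u; unfold average, Rdiv; ring).
  now apply little_lipschitz_scale, little_lipschitz_sum_n.
Qed.

Section Averaging.
Variables (f : X -> R) (L c sigma Kbad : R) (g : nat -> X -> R) (D del : nat -> R).
Hypothesis Hf : lipschitz_with f L.
Hypothesis HL : 0 <= L.
Hypothesis Hc : 0 <= c.
Hypothesis Hsigma : sigma <= L + 2 * c.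
Hypothesis HKbad : 0 <= Kbad.
Hypothesis HD : forall i, D (S i) <= D i /\ D (S i) <= del i.
Hypothesis Hclose : forall i u, Rabs (g i u - f u) <= c * D i.
Hypothesis Hsmall : forall i u v, d u v < del i -> Rabs (g i u - g i v) <= sigma * d u v.
Hypothesis Hlip : forall i, lipschitz_with (g i) Kbad.

(* Averaging dilutes the single scale at which [g i] is neither close to [f] nor flat. *)
Lemma average_lipschitz K : lipschitz_with (average g K) (L + 2 * c + Kbad / INR (S K)).
Proof.
  intros u v. pose proof (dist_nonneg u v) as Ht.
  assert (HK : 0 < INR (S K)) by apply lt_0_INR, Nat.lt_0_succ.
  rewrite average_sub, Rabs_div, (Rabs_right (INR (S K))) by lra.
  apply Rle_div_l; [exact HK|].
  eapply Rle_trans; [apply (sum_n_Rabs_le _ (fun i => Rabs (g i u - g i v))); intros; apply Rle_refl|].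
  eapply Rle_trans.
  - apply (sum_n_one_exception _ D del (d u v) ((L + 2 * c) * d u v) ((L + 2 * c + Kbad) * d u v));
      [nra|exact HD| |].
    + intros i [Hi|Hi].
      * replace (g i u - g i v) with ((g i u - f u) - (g i v - f v) + (f u - f v)) by ring.
        eapply Rle_trans; [apply Rabs_triang|].
        eapply Rle_trans; [apply Rplus_le_compat_r, Rabs_triang|].
        rewrite Rabs_Ropp. pose proof (Hclose i u). pose proof (Hclose i v).
        pose proof (Hf u v). nra.
      * eapply Rle_trans; [now apply Hsmall|]. nra.
    + intros i. eapply Rle_trans; [apply Hlip|]. nra.
  - replace ((L + 2 * c + Kbad / INR (S K)) * d u v * INR (S K))
      with (INR (S K) * ((L + 2 * c) * d u v) + Kbad * d u v) by (field; lra). nra.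
Qed.

End Averaging.

Section FunctionSeries.
Variables (fk : nat -> X -> R) (q C : R).
Hypothesis Hq : 0 <= q < 1.
Hypothesis Hfk0 : forall k, fk k x0 = 0.
Hypothesis Hfk : forall k, lipschitz_with (fk k) (q ^ k * C).

Let series_fun u := Series (fun k => fk k u).

Lemma series_fun_increment u v k : Rabs (fk k u - fk k v) <= q ^ k * (C * d u v).
Proof. rewrite <- Rmult_assoc. apply Hfk. Qed.

Lemma series_fun_ex u : ex_series (fun k => fk k u).
Proof.
  apply (geometric_domination _ q (C * d u x0) Hq). intros k.
  pose proof (series_fun_increment u x0 k) as H. now rewrite Hfk0, Rminus_0_r in H.
Qed.

Lemma series_fun_diff u v : series_fun u - series_fun v = Series (fun k => fk k u - fk k v).
Proof. unfold series_fun. rewrite Series_minus; auto using series_fun_ex. Qed.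

Lemma series_fun_base : series_fun x0 = 0.
Proof.
  unfold series_fun. rewrite (Series_ext _ (fun _ => 0)) by auto.
  rewrite (Series_finite _ 0) by auto. now rewrite sum_O.
Qed.

Lemma series_fun_lipschitz : lipschitz_with series_fun (C / (1 - q)).
Proof.
  intros u v. rewrite series_fun_diff.
  eapply Rle_trans; [apply (geometric_domination _ q (C * d u v) Hq), series_fun_increment|].
  right. field. lra.
Qed.

Lemma series_fun_little :
  0 <= C -> (forall k, little_lipschitz (fk k)) -> little_lipschitz series_fun.
Proof.
  intros HC Hlittle eps Heps.
  destruct (pow_lt_1_zero q ltac:(rewrite Rabs_right; lra) (eps / 2 * (1 - q) / (C + 1))
      ltac:(apply Rdiv_lt_0_compat; [apply Rmult_lt_0_compat|]; lra)) as [K HK].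
  specialize (HK (S K) ltac:(lia)). rewrite Rabs_right in HK by (apply Rle_ge, pow_le; lra).
  assert (Htail : q ^ S K * C / (1 - q) <= eps / 2).
  { apply Rle_div_l; [lra|]. apply Rlt_le in HK. apply Rle_div_r in HK; [|lra].
    pose proof (pow_le q (S K) (proj1 Hq)). nra. }
  destruct (little_lipschitz_sum_n fk K Hlittle (eps / 2) ltac:(lra)) as [delta [Hdelta Hpartial]].
  exists delta. split; [exact Hdelta|]. intros u v Huv.
  pose proof (geometric_domination _ q (C * d u v) Hq (series_fun_increment u v)) as [Hex _].
  rewrite series_fun_diff, (Series_incr_n _ (S K)) by (lia || exact Hex).
  simpl pred. rewrite <- sum_n_Reals.
  eapply Rle_trans; [apply Rabs_triang|].
  rewrite sum_n_Rminus.
  assert (Hrest : Rabs (Series (fun k => fk (S K + k)%nat u - fk (S K + k)%nat v))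
                  <= q ^ S K * (C * d u v) / (1 - q)).
  { apply geometric_domination; [exact Hq|]. intros k.
    eapply Rle_trans; [apply series_fun_increment|]. rewrite pow_add. right. ring. }
  specialize (Hpartial u v Huv).
  replace (q ^ S K * (C * d u v) / (1 - q)) with (q ^ S K * C / (1 - q) * d u v) in Hrest
    by (field; lra).
  pose proof (dist_nonneg u v). nra.
Qed.

End FunctionSeries.

(** * The operators [T] and [S] *)

Lemma dual_norm_le_of (phi : (X -> R) -> R) B :
  (forall g, Lip0 d x0 g -> lipschitz_with g 1 -> Rabs (phi g) <= B) ->
  Rbar_le (dual_norm d x0 phi) B.
Proof.
  intros Hphi. apply (proj2 (Lub_Rbar_correct _)). intros r [g [Hg [Hg1 ->]]].
  apply Hphi; [exact Hg|now apply lipnorm_le_iff].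
Qed.

Lemma dual_norm_ge_of (phi : (X -> R) -> R) g :
  Lip0 d x0 g -> lipschitz_with g 1 -> Rbar_le (Rabs (phi g)) (dual_norm d x0 phi).
Proof.
  intros Hg Hg1. apply (proj1 (Lub_Rbar_correct _)). exists g.
  split; [exact Hg|split; [now apply lipnorm_le_iff|reflexivity]].
Qed.

Section Pairs.
Variables xs ys : nat -> X.
Hypothesis Hne : forall n, xs n <> ys n.

Local Notation T := (Tinterp d xs ys).
Local Notation dn n := (d (xs n) (ys n)).

Lemma pair_dist_pos n : 0 < dn n.
Proof. apply dist_pos, Hne. Qed.

Lemma T_diff g n : g (xs n) - g (ys n) = T g n * dn n.
Proof. unfold Tinterp. field. apply Rgt_not_eq, pair_dist_pos. Qed.

Lemma T_scale g c : T (fun u => c * g u) = fun n => c * T g n.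
Proof.
  apply functional_extensionality. intros n. unfold Tinterp. field. apply Rgt_not_eq, pair_dist_pos.
Qed.

Lemma T_lipschitz_bound g K n : lipschitz_with g K -> Rabs (T g n) <= K.
Proof.
  intros Hg. pose proof (pair_dist_pos n). unfold Tinterp.
  rewrite Rabs_div, (Rabs_right (dn n)) by lra. apply Rle_div_l; [lra|]. apply Hg.
Qed.

Lemma T_uniform_close g h n e :
  (forall u, Rabs (g u - h u) <= e) -> Rabs (T g n - T h n) <= 2 * e / dn n.
Proof.
  intros Hgh. pose proof (pair_dist_pos n). unfold Tinterp.
  replace ((g (xs n) - g (ys n)) / dn n - (h (xs n) - h (ys n)) / dn n)
    with (((g (xs n) - h (xs n)) - (g (ys n) - h (ys n))) / dn n) by (field; lra).
  rewrite Rabs_div, (Rabs_right (dn n)) by lra. apply Rmult_le_compat_r.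
  - left. now apply Rinv_0_lt_compat.
  - eapply Rle_trans; [apply Rabs_triang|]. rewrite Rabs_Ropp.
    pose proof (Hgh (xs n)). pose proof (Hgh (ys n)). lra.
Qed.

Lemma T_close_or_flat g f c D del sigma n : 0 <= c ->
  (forall u, Rabs (g u - f u) <= c * D) ->
  (forall u v, d u v < del -> Rabs (g u - g v) <= sigma * d u v) ->
  (D <= dn n -> Rabs (T g n - T f n) <= 2 * c) /\ (dn n < del -> Rabs (T g n) <= sigma).
Proof.
  intros Hc Hclose Hsmall. pose proof (pair_dist_pos n). split; intros Hn.
  - eapply Rle_trans; [now apply T_uniform_close|]. apply Rle_div_l; [lra|]. nra.
  - unfold Tinterp. rewrite Rabs_div, (Rabs_right (dn n)) by lra.
    apply Rle_div_l; [lra|]. now apply Hsmall.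
Qed.

Definition S_lower_bound J := 0 < J /\ forall lam, in_l1 lam ->
  Rbar_le (J * l1norm lam) (dual_norm d x0 (S_op d xs ys lam)).
Definition linf_interp_bound K := 1 <= K /\ forall a, in_linf a -> sup_le1 a ->
  exists f, Lip0 d x0 f /\ lipnorm_le d f K /\ T f = a.
Definition c0_lip_interp_bound K := 0 < K /\ forall a, in_c0 a -> sup_le1 a ->
  exists f, lip0 d x0 f /\ lipnorm_le d f K /\ T f = a.
Definition c0_Lip_interp_bound K := 0 < K /\ forall a, in_c0 a -> sup_le1 a ->
  exists f, Lip0 d x0 f /\ lipnorm_le d f K /\ T f = a.

Lemma S_lower_bound_test J lam B : S_lower_bound J -> in_l1 lam ->
  (forall g, Lip0 d x0 g -> lipschitz_with g 1 -> Rabs (S_op d xs ys lam g) <= B) ->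
  J * l1norm lam <= B.
Proof.
  intros [_ HJ] Hlam HB.
  exact (Rbar_le_trans _ _ (Finite B) (HJ lam Hlam) (dual_norm_le_of _ B HB)).
Qed.

(** * Chains of pairs and the interpolating potential *)

(* A chain moves freely from its current point to the entry of each step, then jumps across
   the pair to the exit; [chain_coef s] is the [l_1] vector whose [S]-image is that chain. *)
Inductive step := Fwd (n : nat) | Bwd (n : nat).

Definition step_index st := match st with Fwd n | Bwd n => n end.
Definition step_sign st := match st with Fwd _ => 1 | Bwd _ => -1 end.
Definition step_entry st := match st with Fwd n => ys n | Bwd n => xs n end.
Definition step_exit st := match st with Fwd n => xs n | Bwd n => ys n end.
Definition step_weight (t : nat -> R) st :=
  step_sign st * dn (step_index st) * t (step_index st).

Fixpoint chain_end u s :=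
  match s with nil => u | st :: s' => chain_end (step_exit st) s' end.
Fixpoint chain_length u s :=
  match s with nil => 0 | st :: s' => d u (step_entry st) + chain_length (step_exit st) s' end.
Fixpoint chain_weight t s :=
  match s with nil => 0 | st :: s' => step_weight t st + chain_weight t s' end.
Fixpoint chain_coef s m :=
  match s with
  | nil => 0
  | st :: s' => (if Nat.eq_dec m (step_index st) then step_sign st * dn (step_index st) else 0)
                + chain_coef s' m
  end.
Fixpoint chain_max_index s :=
  match s with nil => 0%nat | st :: s' => Nat.max (step_index st) (chain_max_index s') end.

Lemma chain_coef_vanish s m : (chain_max_index s < m)%nat -> chain_coef s m = 0.
Proof.
  induction s as [|st s IH]; simpl; intros Hm; [reflexivity|].
  rewrite IH by lia. destruct (Nat.eq_dec m (step_index st)); [lia|ring].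
Qed.

Lemma chain_coef_sum s t N :
  (chain_max_index s <= N)%nat -> sum_n (fun m => chain_coef s m * t m) N = chain_weight t s.
Proof.
  induction s as [|st s IH]; simpl; intros HN.
  - rewrite (sum_n_ext _ (fun _ => 0)) by (intros; simpl; ring).
    rewrite sum_n_const. simpl. ring.
  - set (n := step_index st) in *.
    rewrite (sum_n_ext _ (fun m => plus (if Nat.eq_dec m n then step_weight t st else 0)
                                         (chain_coef s m * t m))).
    + rewrite sum_n_plus, sum_n_indicator, IH by lia.
      destruct (Compare_dec.le_dec n N); [reflexivity|lia].
    + intros m. unfold plus, step_weight; simpl. fold n.
      destruct (Nat.eq_dec m n) as [->|]; ring.
Qed.

Lemma step_weight_T g st : step_weight (T g) st = g (step_exit st) - g (step_entry st).
Proof.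
  pose proof (pair_dist_pos (step_index st)).
  unfold step_weight, Tinterp. destruct st as [n|n]; simpl in *; field; lra.
Qed.

Lemma chain_weight_T g u s : lipschitz_with g 1 ->
  Rabs (chain_weight (T g) s - (g (chain_end u s) - g u)) <= chain_length u s.
Proof.
  intros Hg. revert u. induction s as [|st s IH]; intros u; simpl.
  - rewrite Rminus_eq_0, Rminus_eq_0, Rabs_R0. lra.
  - rewrite step_weight_T.
    replace (g (step_exit st) - g (step_entry st) + chain_weight (T g) s
             - (g (chain_end (step_exit st) s) - g u))
      with ((chain_weight (T g) s - (g (chain_end (step_exit st) s) - g (step_exit st)))
            + (g u - g (step_entry st))) by ring.
    eapply Rle_trans; [apply Rabs_triang|]. specialize (IH (step_exit st)).
    specialize (Hg u (step_entry st)). lra.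
Qed.

Lemma closed_chain_cost_nonneg J a u s : S_lower_bound J -> sup_le1 a ->
  0 <= / J * (chain_length u s + d (chain_end u s) u) + chain_weight a s.
Proof.
  intros HJ Ha. set (N := chain_max_index s).
  assert (Hvanish : forall m, (N < m)%nat -> chain_coef s m = 0)
    by (intros; now apply chain_coef_vanish).
  assert (Hl1 : in_l1 (chain_coef s)).
  { apply (ex_series_finite _ N). intros m Hm. rewrite Hvanish by exact Hm. apply Rabs_R0. }
  assert (Hnorm : Rabs (chain_weight a s) <= l1norm (chain_coef s)).
  { unfold l1norm.
    rewrite (Series_finite _ N) by (intros m Hm; rewrite Hvanish by exact Hm; apply Rabs_R0).
    rewrite <- (chain_coef_sum s a N) by (unfold N; lia). apply sum_n_Rabs_le. intros m.
    rewrite Rabs_mult. specialize (Ha m). pose proof (Rabs_pos (chain_coef s m)). nra. }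
  assert (Htest : J * l1norm (chain_coef s) <= chain_length u s + d (chain_end u s) u).
  { apply (S_lower_bound_test J _ _ HJ Hl1). intros g _ Hg. unfold S_op.
    rewrite (Series_finite _ N) by (intros m Hm; rewrite Hvanish by exact Hm; ring).
    rewrite chain_coef_sum by (unfold N; lia).
    pose proof (chain_weight_T g u s Hg). specialize (Hg (chain_end u s) u).
    rewrite Rabs_le_between in *. split; lra. }
  destruct HJ as [HJ _].
  apply Rmult_le_compat_l with (r := / J) in Htest; [|left; now apply Rinv_0_lt_compat].
  rewrite <- Rmult_assoc, Rinv_l, Rmult_1_l in Htest by lra.
  pose proof (Rle_abs (- chain_weight a s)). rewrite Rabs_Ropp in *. lra.
Qed.

Lemma chain_end_snoc u s st : chain_end u (s ++ st :: nil) = step_exit st.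
Proof. revert u. induction s as [|st' s IH]; intros u; simpl; auto. Qed.

Lemma chain_length_snoc u s st :
  chain_length u (s ++ st :: nil) = chain_length u s + d (chain_end u s) (step_entry st).
Proof. revert u. induction s as [|st' s IH]; intros u; simpl; [ring|]. rewrite IH. ring. Qed.

Lemma chain_weight_snoc t s st :
  chain_weight t (s ++ st :: nil) = chain_weight t s + step_weight t st.
Proof. induction s as [|st' s IH]; simpl; [ring|]. rewrite IH. ring. Qed.

Section Potential.
Variables (L : R) (a : nat -> R).
Hypothesis HL : 0 <= L.
Hypothesis Hclosed :
  forall s, 0 <= L * (chain_length x0 s + d (chain_end x0 s) x0) + chain_weight a s.

Definition chain_cost s v := L * (chain_length x0 s + d (chain_end x0 s) v) + chain_weight a s.

(* The McShane-type infimum over chains from the base point: [a] is read as prescribed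
   slopes along the pairs and [L] as the price of free travel. *)
Definition potential v := real (Glb_Rbar (fun r => exists s, r = chain_cost s v)).

Lemma chain_cost_lower s v : - L * d v x0 <= chain_cost s v.
Proof.
  unfold chain_cost. pose proof (Hclosed s). pose proof (dist_triangle (chain_end x0 s) v x0). nra.
Qed.

Lemma potential_spec v : (forall s, potential v <= chain_cost s v) /\
  (forall b, (forall s, b <= chain_cost s v) -> b <= potential v).
Proof.
  destruct (Glb_Rbar_real (fun r => exists s, r = chain_cost s v) (- L * d v x0) (chain_cost nil v))
    as [Hlow Hgreat].
  - now exists nil.
  - intros r [s ->]. apply chain_cost_lower.
  - split.
    + intros s. apply Hlow. now exists s.
    + intros b Hb. apply Hgreat. intros r [s ->]. apply Hb.
Qed.

Lemma potential_lipschitz : lipschitz_with potential L.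
Proof.
  assert (Hone : forall u v, potential v <= potential u + L * d u v).
  { intros u v. enough (potential v - L * d u v <= potential u) by lra.
    apply (proj2 (potential_spec u)). intros s.
    pose proof (proj1 (potential_spec v) s). unfold chain_cost in *.
    pose proof (dist_triangle (chain_end x0 s) u v). nra. }
  intros u v. apply Rabs_le. pose proof (Hone u v). pose proof (Hone v u) as Hvu.
  rewrite (dist_sym v u) in Hvu. lra.
Qed.

Lemma potential_base : potential x0 = 0.
Proof.
  apply Rle_antisym.
  - pose proof (proj1 (potential_spec x0) nil). unfold chain_cost in *. simpl in *.
    rewrite dist_refl in *. lra.
  - apply (proj2 (potential_spec x0)). intros s. pose proof (chain_cost_lower s x0).
    rewrite dist_refl in *. lra.
Qed.

Lemma chain_cost_snoc s st :
  chain_cost (s ++ st :: nil) (step_exit st) = chain_cost s (step_entry st) + step_weight a st.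
Proof.
  unfold chain_cost. rewrite chain_end_snoc, chain_length_snoc, chain_weight_snoc, dist_refl. ring.
Qed.

Lemma potential_step st : potential (step_exit st) <= potential (step_entry st) + step_weight a st.
Proof.
  enough (potential (step_exit st) - step_weight a st <= potential (step_entry st)) by lra.
  apply (proj2 (potential_spec (step_entry st))). intros s.
  pose proof (proj1 (potential_spec (step_exit st)) (s ++ st :: nil)).
  rewrite chain_cost_snoc in *. lra.
Qed.

Lemma T_potential : T potential = a.
Proof.
  apply functional_extensionality. intros n.
  pose proof (potential_step (Fwd n)) as Hfwd. pose proof (potential_step (Bwd n)) as Hbwd.
  unfold step_weight in *; simpl in *.
  pose proof (pair_dist_pos n). unfold Tinterp.
  replace (potential (xs n) - potential (ys n)) with (a n * dn n) by lra. field. lra.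
Qed.

End Potential.

Lemma S_lower_bound_interp J a : S_lower_bound J -> sup_le1 a ->
  exists f, Lip0 d x0 f /\ lipschitz_with f (/ J) /\ T f = a.
Proof.
  intros HJ Ha. assert (HL : 0 <= / J) by (left; apply Rinv_0_lt_compat, HJ).
  pose proof (fun s => closed_chain_cost_nonneg J a x0 s HJ Ha) as Hclosed.
  exists (potential (/ J) a). split; [split|split].
  - now apply potential_base.
  - exists (/ J). now apply lipnorm_le_iff, potential_lipschitz.
  - now apply potential_lipschitz.
  - now apply T_potential.
Qed.

(** * Lower bounds of [S] and interpolation constants *)

Lemma S_lower_bound_le1 J : S_lower_bound J -> 1 <= / J.
Proof.
  intros HJ. destruct (S_lower_bound_interp J (fun _ => 1) HJ) as [f [_ [Hf HT]]].
  - intros n. rewrite Rabs_R1. lra.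
  - specialize (Hf (xs 0%nat) (ys 0%nat)). rewrite T_diff, HT, Rmult_1_l in Hf.
    pose proof (pair_dist_pos 0). rewrite Rabs_right in Hf by lra.
    apply Rmult_le_reg_r with (dn 0%nat); lra.
Qed.

Lemma S_lower_bound_inv_interp K a : 0 < K -> S_lower_bound (/ K) -> sup_le1 a ->
  exists f, Lip0 d x0 f /\ lipnorm_le d f K /\ T f = a.
Proof.
  intros HK HJ Ha. destruct (S_lower_bound_interp (/ K) a HJ Ha) as [f [Hf [HfK HT]]].
  rewrite Rinv_inv in HfK. exists f. split; [exact Hf|split; [now apply lipnorm_le_iff|exact HT]].
Qed.

Lemma c0_Lip_interp_S_lower_bound K : c0_Lip_interp_bound K -> S_lower_bound (/ K).
Proof.
  intros [HK Hinterp]. split; [now apply Rinv_0_lt_compat|]. intros lam Hlam.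
  assert (Hpartial : forall N, Rbar_le (/ K * sum_n (fun m => Rabs (lam m)) N)
                                       (dual_norm d x0 (S_op d xs ys lam))).
  { intros N. destruct (Hinterp (sign_trunc lam N)) as [f [[Hf0 _] [Hf HT]]].
    - apply (is_lim_seq_ext_loc (fun _ => 0)); [|apply is_lim_seq_const].
      exists (S N). intros m Hm. unfold sign_trunc.
      destruct (Compare_dec.le_dec m N); [lia|reflexivity].
    - intros m. unfold sign_trunc.
      destruct (Compare_dec.le_dec m N); [destruct (Rle_dec 0 (lam m))|]; apply Rabs_le; lra.
    - apply lipnorm_le_iff in Hf.
      assert (HS : S_op d xs ys lam (fun u => / K * f u) = / K * sum_n (fun m => Rabs (lam m)) N).
      { unfold S_op. rewrite T_scale, HT, (Series_finite _ N).
        - rewrite <- sum_n_Rmult_l. apply sum_n_Rext_loc. intros m Hm.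
          pose proof (sign_trunc_mul lam N m) as Hm'.
          destruct (Compare_dec.le_dec m N); [|lia]. rewrite <- Hm'. ring.
        - intros m Hm. unfold sign_trunc. destruct (Compare_dec.le_dec m N); [lia|ring]. }
      rewrite <- HS. eapply Rbar_le_trans; [|apply dual_norm_ge_of].
      + simpl. apply Rle_abs.
      + split; [rewrite Hf0; ring|].
        exists (Rabs (/ K) * K). now apply lipnorm_le_iff, lipschitz_with_scale.
      + replace 1 with (Rabs (/ K) * K)
          by (rewrite Rabs_right by (left; now apply Rinv_0_lt_compat); field; lra).
        now apply lipschitz_with_scale. }
  destruct (dual_norm d x0 (S_op d xs ys lam)) as [D| |]; simpl in *;
    [|exact I|now apply (Hpartial 0%nat)].
  enough (l1norm lam <= K * D).
  { apply Rmult_le_reg_l with K; [exact HK|]. rewrite <- Rmult_assoc, Rinv_r, Rmult_1_l; lra. }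
  apply l1norm_le_of_partial; [exact Hlam|]. intros N. specialize (Hpartial N).
  apply Rmult_le_compat_l with (r := K) in Hpartial; [|lra].
  rewrite <- Rmult_assoc, Rinv_r, Rmult_1_l in Hpartial; lra.
Qed.

Lemma S_lower_bound_limit M : 0 < M ->
  (forall eps, 0 < eps -> exists K, K < M + eps /\ S_lower_bound (/ K)) -> S_lower_bound (/ M).
Proof.
  intros HM Happrox. split; [now apply Rinv_0_lt_compat|]. intros lam Hlam.
  assert (Hl : 0 <= l1norm lam) by now apply l1norm_nonneg.
  destruct (dual_norm d x0 (S_op d xs ys lam)) as [D| |] eqn:HD; simpl; [|exact I|].
  - enough (l1norm lam <= M * D).
    { apply Rmult_le_reg_l with M; [exact HM|]. rewrite <- Rmult_assoc, Rinv_r, Rmult_1_l; lra. }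
    apply le_mult_of_le_mult_plus_eps; [exact HM|exact Hl|]. intros eps Heps.
    destruct (Happrox eps Heps) as [K [HKM [HK HKb]]].
    assert (HKpos : 0 < K) by (rewrite <- (Rinv_inv K); now apply Rinv_0_lt_compat).
    specialize (HKb lam Hlam). rewrite HD in HKb. simpl in HKb.
    assert (HKD : l1norm lam <= K * D).
    { apply Rmult_le_compat_l with (r := K) in HKb; [|lra].
      rewrite <- Rmult_assoc, Rinv_r, Rmult_1_l in HKb; lra. }
    assert (0 <= D) by nra. nra.
  - destruct (Happrox 1 Rlt_0_1) as [K [_ [_ HKb]]]. specialize (HKb lam Hlam).
    now rewrite HD in HKb.
Qed.

Lemma interp_of_unit_ball (P : (nat -> R) -> Prop) (Q : (X -> R) -> Prop) :
  (forall c a, P a -> P (fun n => c * a n)) -> (forall c f, Q f -> Q (fun u => c * f u)) ->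
  (forall a, P a -> exists B, 0 < B /\ forall n, Rabs (a n) <= B) ->
  (forall a, P a -> sup_le1 a -> exists f, Q f /\ T f = a) ->
  forall a, P a -> exists f, Q f /\ T f = a.
Proof.
  intros HPscale HQscale Hbounded Hunit a Ha. destruct (Hbounded a Ha) as [B [HB HaB]].
  destruct (Hunit (fun n => / B * a n)) as [f [Hf HT]]; [now apply HPscale| |].
  - intros n. rewrite Rabs_mult, Rabs_right by (left; now apply Rinv_0_lt_compat).
    rewrite Rmult_comm. apply Rle_div_l; [exact HB|]. rewrite Rmult_1_l. apply HaB.
  - exists (fun u => B * f u). split; [now apply HQscale|].
    rewrite T_scale, HT. apply functional_extensionality. intros n. field. lra.
Qed.

Lemma c0_Lip_interp_bound_iff_S_lower_bound K :
  0 < K -> c0_Lip_interp_bound K <-> S_lower_bound (/ K).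
Proof.
  intros HK. split; [apply c0_Lip_interp_S_lower_bound|]. intros HJ.
  split; [exact HK|]. intros a _ Ha. now apply S_lower_bound_inv_interp.
Qed.

Lemma c0_Lip_interp_bound_iff_linf K : c0_Lip_interp_bound K <-> linf_interp_bound K.
Proof.
  split.
  - intros HK. pose proof (proj1 HK) as HKpos.
    apply c0_Lip_interp_bound_iff_S_lower_bound in HK; [|exact HKpos].
    split; [rewrite <- (Rinv_inv K); now apply S_lower_bound_le1|].
    intros a _ Ha. now apply S_lower_bound_inv_interp.
  - intros [HK Hinterp]. split; [lra|]. intros a _ Ha. apply Hinterp; [now exists 1|exact Ha].
Qed.

Lemma c0_Lip_interp_bound_inf_attained M : 0 < M ->
  is_inf c0_Lip_interp_bound M -> c0_Lip_interp_bound M.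
Proof.
  intros HM Hinf. apply c0_Lip_interp_bound_iff_S_lower_bound; [exact HM|].
  apply S_lower_bound_limit; [exact HM|]. intros eps Heps.
  destruct (is_inf_approx _ M eps Hinf Heps) as [K [HK HKM]].
  exists K. split; [exact HKM|]. now apply c0_Lip_interp_S_lower_bound.
Qed.

Lemma linf_interpolating_iff M : 1 <= M ->
  ((forall a, in_linf a -> exists f, Lip0 d x0 f /\ T f = a) /\ is_inf linf_interp_bound M) <->
  is_inf c0_Lip_interp_bound M.
Proof.
  intros HM. split.
  - intros [_ Hinf]. apply (is_inf_ext linf_interp_bound); [|exact Hinf].
    intros K. symmetry. apply c0_Lip_interp_bound_iff_linf.
  - intros Hinf.
    split; [|now apply (is_inf_ext c0_Lip_interp_bound), Hinf; apply c0_Lip_interp_bound_iff_linf].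
    apply interp_of_unit_ball.
    + intros c a [B HB]. exists (Rabs c * B). intros n. rewrite Rabs_mult.
      apply Rmult_le_compat_l; [apply Rabs_pos|apply HB].
    + intros c f. apply Lip0_scale.
    + intros a [B HB]. exists (Rabs B + 1). split; [pose proof (Rabs_pos B); lra|].
      intros n. specialize (HB n). pose proof (Rle_abs B). lra.
    + apply c0_Lip_interp_bound_inf_attained, c0_Lip_interp_bound_iff_linf in Hinf; [|lra].
      intros a Ha Ha1. destruct (proj2 Hinf a Ha Ha1) as [f [Hf [_ HT]]]. now exists f.
Qed.

Lemma S_embedding_iff M : 1 <= M ->
  ((exists J, S_lower_bound J) /\ is_max S_lower_bound (/ M)) <-> is_inf c0_Lip_interp_bound M.
Proof.
  intros HM. assert (HM0 : 0 < M) by lra. split.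
  - intros [_ [HSM Hmax]]. split.
    + intros K HK. pose proof (proj1 HK) as HK0.
      apply c0_Lip_interp_bound_iff_S_lower_bound in HK; [|exact HK0].
      apply Hmax in HK. apply Rinv_le_contravar in HK; [|now apply Rinv_0_lt_compat].
      now rewrite !Rinv_inv in HK.
    + intros b Hb. apply Hb. now apply c0_Lip_interp_bound_iff_S_lower_bound.
  - intros Hinf. pose proof (c0_Lip_interp_bound_inf_attained M HM0 Hinf) as HMb.
    apply c0_Lip_interp_bound_iff_S_lower_bound in HMb; [|exact HM0].
    split; [now exists (/ M)|split; [exact HMb|]]. intros J HJ. pose proof (proj1 HJ) as HJ0.
    rewrite <- (Rinv_inv J) in HJ.
    apply c0_Lip_interp_bound_iff_S_lower_bound in HJ; [|now apply Rinv_0_lt_compat].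
    apply (proj1 Hinf) in HJ. apply Rinv_le_contravar in HJ; [|exact HM0]. now rewrite Rinv_inv in HJ.
Qed.

(** * Interpolation in [lip_0] *)

(* Two far pairs with nearby endpoints would give [||S (e_n - e_m)|| <= J], whereas
   [||e_n - e_m||_1 = 2]. *)
Lemma S_lower_bound_pair_dist_to_0 J : mcompact d -> S_lower_bound J ->
  forall r, 0 < r -> exists N, forall n, (N <= n)%nat -> dn n < r.
Proof.
  intros Hcpt HJ r Hr. apply NNPP. intros Hno.
  destruct (infinitely_often_injective (fun n => r <= dn n)) as [psi [Hfar Hinj]].
  { intros N. apply NNPP. intros HN. apply Hno. exists N. intros n Hn.
    apply Rnot_le_lt. intros Hrn. apply HN. now exists n. }
  assert (HJpos : 0 < J) by apply HJ.
  set (rho := J * r / 8).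
  destruct (compact_close_pair rho (fun k => xs (psi k)) (fun k => ys (psi k)) Hcpt
              ltac:(unfold rho; apply Rdiv_lt_0_compat; [nra|lra])) as [k [k' [Hkk' [Hx Hy]]]].
  simpl in Hx, Hy. set (n := psi k) in *. set (m := psi k') in *.
  assert (Hnm : n <> m) by (intros E; now apply Hkk', Hinj).
  destruct (unit_diff_l1 n m Hnm) as [Hl1 Hnorm].
  assert (Htest : J * l1norm (unit_diff n m) <= J).
  { apply (S_lower_bound_test J _ _ HJ Hl1). intros g _ Hg. unfold S_op.
    rewrite unit_diff_series. unfold Tinterp.
    replace J with (2 * (4 * rho) / r) by (unfold rho; field; lra).
    pose proof (dist_triangle (xs n) (xs m) (ys n)). pose proof (dist_triangle (xs m) (ys m) (ys n)).
    pose proof (dist_triangle (xs m) (xs n) (ys m)). pose proof (dist_triangle (xs n) (ys n) (ys m)).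
    rewrite (dist_sym (xs m) (xs n)), (dist_sym (ys m) (ys n)) in *.
    apply quotient_diff_le; [exact Hr|apply Hfar|apply Hfar| | |].
    - specialize (Hg (xs m) (ys m)). lra.
    - replace (g (xs n) - g (ys n) - (g (xs m) - g (ys m)))
        with ((g (xs n) - g (xs m)) - (g (ys n) - g (ys m))) by ring.
      eapply Rle_trans; [apply Rabs_triang|]. rewrite Rabs_Ropp.
      pose proof (Hg (xs n) (xs m)). pose proof (Hg (ys n) (ys m)). lra.
    - apply Rabs_le. lra. }
  rewrite Hnorm in Htest. lra.
Qed.

Lemma T_little_c0 J g : mcompact d -> S_lower_bound J -> little_lipschitz g -> in_c0 (T g).
Proof.
  intros Hcpt HJ Hg. apply is_lim_seq_spec. intros eps.
  destruct (Hg (eps / 2)) as [delta [Hdelta Hsmall]]; [pose proof (cond_pos eps); lra|].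
  destruct (S_lower_bound_pair_dist_to_0 J Hcpt HJ delta Hdelta) as [N HN].
  exists N. intros n Hn. rewrite Rminus_0_r. pose proof (pair_dist_pos n). unfold Tinterp.
  rewrite Rabs_div, (Rabs_right (dn n)) by lra.
  apply Rle_lt_trans with (eps / 2); [|pose proof (cond_pos eps); lra].
  apply Rle_div_l; [lra|]. now apply Hsmall, HN.
Qed.

Lemma T_series (fk : nat -> X -> R) n : (forall u, ex_series (fun k => fk k u)) ->
  T (fun u => Series (fun k => fk k u)) n = Series (fun k => T (fk k) n).
Proof.
  intros Hex. unfold Tinterp. rewrite <- Series_minus by apply Hex.
  unfold Rdiv. now rewrite Series_scal_r.
Qed.

Lemma T_average_sub g K n b :
  T (average g K) n - b = sum_n (fun i => T (g i) n - b) K / INR (S K).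
Proof.
  pose proof (pair_dist_pos n). assert (HK : INR (S K) <> 0) by (apply not_0_INR; lia).
  rewrite sum_n_Rminus, sum_n_const. unfold Tinterp at 1. rewrite average_sub.
  rewrite (sum_n_Rext_loc (fun i => T (g i) n) (fun i => / dn n * (g i (xs n) - g i (ys n))))
    by (intros; unfold Tinterp, Rdiv; ring).
  rewrite sum_n_Rmult_l. field. lra.
Qed.

Lemma T_average_close g D del K n b e B : e <= B ->
  (forall i, D (S i) <= D i /\ D (S i) <= del i) ->
  (forall i, D i <= dn n \/ dn n < del i -> Rabs (T (g i) n - b) <= e) ->
  (forall i, Rabs (T (g i) n - b) <= B) ->
  Rabs (T (average g K) n - b) <= e + (B - e) / INR (S K).
Proof.
  intros HeB HD Hgood Hbad. assert (HK : 0 < INR (S K)) by apply lt_0_INR, Nat.lt_0_succ.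
  rewrite T_average_sub, Rabs_div, (Rabs_right (INR (S K))) by lra.
  apply Rle_div_l; [exact HK|].
  eapply Rle_trans; [apply (sum_n_Rabs_le _ (fun i => Rabs (T (g i) n - b))); intros; apply Rle_refl|].
  eapply Rle_trans; [now apply (sum_n_one_exception _ D del (dn n) e B)|].
  right. field. lra.
Qed.

Section Iteration.
Variables C q : R.
Hypothesis HC : 0 <= C.
Hypothesis Hq : 0 < q < 1.
Hypothesis HTc0 : forall h, little_lipschitz h -> in_c0 (T h).
Variable A : (nat -> R) -> X -> R.
Hypothesis HA : forall beta, in_c0 beta -> sup_le1 beta -> A beta x0 = 0 /\
  lipschitz_with (A beta) C /\ little_lipschitz (A beta) /\ forall n, Rabs (T (A beta) n - beta n) <= q.
Variable alpha : nat -> R.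
Hypothesis Halpha0 : in_c0 alpha.
Hypothesis Halpha1 : sup_le1 alpha.

(* The residual is rescaled into the unit ball before [A] is applied, so it shrinks like
   [q ^ k] and the corrections form a convergent series. *)
Fixpoint residual k :=
  match k with
  | O => alpha
  | S k' => fun n => residual k' n - q ^ k' * T (A (fun m => residual k' m / q ^ k')) n
  end.

Definition correction k := A (fun m => residual k m / q ^ k).

Lemma pow_q_pos k : 0 < q ^ k.
Proof. apply pow_lt. lra. Qed.

Lemma residual_rescaled k : in_c0 (residual k) -> (forall n, Rabs (residual k n) <= q ^ k) ->
  in_c0 (fun m => residual k m / q ^ k) /\ sup_le1 (fun m => residual k m / q ^ k).
Proof.
  intros H0 H1. pose proof (pow_q_pos k). split.
  - unfold in_c0. replace (Finite 0) with (Rbar_mult 0 (/ q ^ k)) by (simpl; f_equal; ring).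
    now apply is_lim_seq_scal_r.
  - intros m. rewrite Rabs_div, (Rabs_right (q ^ k)) by lra.
    apply Rle_div_l; [lra|]. rewrite Rmult_1_l. apply H1.
Qed.

Lemma residual_small k : in_c0 (residual k) /\ forall n, Rabs (residual k n) <= q ^ k.
Proof.
  induction k as [|k [IH0 IH1]]; [split; [exact Halpha0|intros n; rewrite pow_O; apply Halpha1]|].
  destruct (residual_rescaled k IH0 IH1) as [Hb0 Hb1].
  destruct (HA _ Hb0 Hb1) as [_ [_ [Hlittle Hclose]]]. pose proof (pow_q_pos k). split.
  - unfold in_c0. simpl.
    replace (Finite 0) with (Finite (0 - 0)) by (f_equal; ring).
    apply is_lim_seq_minus'; [exact IH0|].
    replace (Finite 0) with (Rbar_mult (q ^ k) 0) by (simpl; f_equal; ring).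
    apply is_lim_seq_scal_l, HTc0, Hlittle.
  - intros n. simpl.
    replace (residual k n - q ^ k * T (A (fun m => residual k m / q ^ k)) n)
      with (q ^ k * - (T (A (fun m => residual k m / q ^ k)) n - residual k n / q ^ k)) by (field; lra).
    rewrite Rabs_mult, Rabs_Ropp, (Rabs_right (q ^ k)) by lra.
    specialize (Hclose n). nra.
Qed.

Lemma correction_spec k : correction k x0 = 0 /\ lipschitz_with (correction k) C /\
  little_lipschitz (correction k).
Proof.
  destruct (residual_small k) as [H0 H1]. destruct (residual_rescaled k H0 H1) as [Hb0 Hb1].
  unfold correction. destruct (HA _ Hb0 Hb1) as [? [? [? _]]]. auto.
Qed.

Lemma T_corrections_telescope n :
  is_series (fun k => q ^ k * T (correction k) n) (alpha n).
Proof.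
  apply (is_series_ext (fun k => residual k n - residual (S k) n));
    [intros k; simpl; unfold correction; ring|].
  apply (is_series_telescoping (fun k => residual k n)).
  apply (is_lim_seq_le_le (fun k => - q ^ k) _ (fun k => q ^ k)).
  - intros k. apply Rabs_le_between, residual_small.
  - replace (Finite 0) with (Rbar_opp 0) by (simpl; f_equal; ring).
    apply (is_lim_seq_opp (fun k => q ^ k)), is_lim_seq_geom. rewrite Rabs_right; lra.
  - apply is_lim_seq_geom. rewrite Rabs_right; lra.
Qed.

Lemma exact_interp_of_approx :
  exists F, lip0 d x0 F /\ lipschitz_with F (C / (1 - q)) /\ T F = alpha.
Proof.
  set (fk k u := q ^ k * correction k u).
  assert (Hfk : forall k, lipschitz_with (fk k) (q ^ k * C)).
  { intros k. pose proof (lipschitz_with_scale _ _ (q ^ k) (proj1 (proj2 (correction_spec k)))) as H.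
    rewrite Rabs_right in H by (pose proof (pow_q_pos k); lra). exact H. }
  assert (Hfk0 : forall k, fk k x0 = 0)
    by (intros k; unfold fk; rewrite (proj1 (correction_spec k)); ring).
  assert (Hq' : 0 <= q < 1) by lra.
  assert (HF : lipschitz_with (fun u => Series (fun k => fk k u)) (C / (1 - q)))
    by now apply (series_fun_lipschitz fk q C Hq').
  exists (fun u => Series (fun k => fk k u)). split; [|split; [exact HF|]].
  - apply lip0_iff. split; [now apply series_fun_base|split; [now exists (C / (1 - q))|]].
    apply (series_fun_little fk q C Hq' Hfk0 Hfk HC).
    intros k. apply little_lipschitz_scale, correction_spec.
  - apply functional_extensionality. intros n.
    rewrite T_series by (intros u; now apply (series_fun_ex fk q C Hq')).
    apply is_series_unique. unfold fk.
    apply (is_series_ext (fun k => q ^ k * T (correction k) n)); [intros k; now rewrite T_scale|].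
    apply T_corrections_telescope.
Qed.

End Iteration.

Section Interpolation.
Variable sep : R.
Hypothesis Hsep1 : 1 < sep.
Hypothesis Hsep : forall x y, exists f, lip0 d x0 f /\ lipnorm_le d f sep /\ Rabs (f x - f y) = d x y.
Hypothesis Hcpt : mcompact d.

Section FixedLowerBound.
Variable J : R.
Hypothesis HJ : S_lower_bound J.

(* Interpolate the head of [beta] exactly with constant [/ J], make it little Lipschitz at a
   sequence of scales and average; the tail of [beta] is small anyway. *)
Lemma lip_approx_interp beta eps : in_c0 beta -> sup_le1 beta -> 0 < eps <= 1 ->
  exists h, h x0 = 0 /\ lipschitz_with h (/ J + eps) /\ little_lipschitz h /\
    forall n, Rabs (T h n - beta n) <= 2 * eps.
Proof.
  intros Hb0 Hb1 Heps.
  set (L := / J). assert (HL1 : 1 <= L) by now apply S_lower_bound_le1.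
  destruct (proj2 (is_lim_seq_spec _ _) Hb0 (mkposreal (eps / 2) ltac:(lra))) as [N HN].
  simpl in HN.
  destruct (S_lower_bound_interp J (fun m => if Compare_dec.le_dec N m then 0 else beta m) HJ)
    as [f [[Hf0 _] [Hf HTf]]].
  { intros m. destruct (Compare_dec.le_dec N m); [rewrite Rabs_R0; lra|apply Hb1]. }
  destruct (finite_prefix_lower_pos (fun n => dn n) N pair_dist_pos) as [r [Hr Hrn]].
  cbv beta in Hrn.
  destruct (multiscale_approx sep Hsep1 Hsep Hcpt f L ltac:(lra) Hf (eps / 4) (eps / 2) r Hf0
              ltac:(lra) ltac:(lra) Hr) as [g [D [del [HDr [HD [Hg [Hclose Hsmall]]]]]]].
  destruct (nat_inv_small (sep * L + 1) (eps / 2) ltac:(lra)) as [K HK].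
  assert (HKpos : 0 < INR (S K)) by apply lt_0_INR, Nat.lt_0_succ.
  assert (HKmono : forall A, 0 <= A <= sep * L + 1 -> A / INR (S K) <= eps / 2)
    by (intros A HA; eapply Rle_trans; [|exact HK];
        apply Rmult_le_compat_r; [left; now apply Rinv_0_lt_compat|lra]).
  exists (average g K). split; [|split; [|split]].
  - apply average_base. intros i. apply Hg.
  - eapply lipschitz_with_le; [|apply (average_lipschitz f L (eps / 4) (eps / 2) (sep * L) g D del);
      try lra; try nra; auto; intros; apply Hg].
    pose proof (HKmono (sep * L) ltac:(nra)). lra.
  - apply average_little. intros i. apply Hg.
  - intros n. eapply Rle_trans.
    + apply (T_average_close g D del K n (beta n) eps (sep * L + 1)); [nra|exact HD| |].
      * intros i Hi.
        destruct (T_close_or_flat (g i) f (eps / 4) (D i) (del i) (eps / 2) n ltac:(lra)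
                    (Hclose i) (Hsmall i)) as [Hfar Hflat].
        rewrite HTf in Hfar. cbv beta in Hfar. pose proof (Rabs_sub_le (T (g i) n) (beta n)).
        destruct (Compare_dec.le_dec N n) as [HNn|HNn].
        -- specialize (HN n HNn). rewrite Rminus_0_r in HN, Hfar.
           destruct Hi as [Hi|Hi]; [specialize (Hfar Hi)|specialize (Hflat Hi)]; lra.
        -- pose proof (proj2 (HDr i)). pose proof (Hrn n ltac:(lia)). specialize (Hfar ltac:(lra)). lra.
      * intros i. pose proof (T_lipschitz_bound (g i) (sep * L) n (proj1 (proj2 (Hg i)))).
        pose proof (Rabs_sub_le (T (g i) n) (beta n)). specialize (Hb1 n). lra.
    + pose proof (HKmono (sep * L + 1 - eps) ltac:(nra)). lra.
Qed.

Lemma S_lower_bound_c0_lip_interp K : / J < K -> c0_lip_interp_bound K.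
Proof.
  intros HK. set (L := / J) in *. assert (HL1 : 1 <= L) by now apply S_lower_bound_le1.
  set (theta := Rmin (1 / 4) ((K - L) / (1 + 2 * K))).
  assert (Htheta : 0 < theta <= 1 / 4)
    by (split; [apply Rmin_pos; [lra|apply Rdiv_lt_0_compat; lra]|apply Rmin_l]).
  assert (HthetaK : theta * (1 + 2 * K) <= K - L).
  { apply Rle_div_r; [lra|]. apply Rmin_r. }
  split; [lra|]. intros alpha Halpha0 Halpha1.
  destruct (choice (fun beta h => in_c0 beta -> sup_le1 beta -> h x0 = 0 /\
      lipschitz_with h (L + theta) /\ little_lipschitz h /\
      forall n, Rabs (T h n - beta n) <= 2 * theta)) as [A HA].
  { intros beta. destruct (classic (in_c0 beta /\ sup_le1 beta)) as [[H0 H1]|Hno].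
    - destruct (lip_approx_interp beta theta H0 H1 ltac:(lra)) as [h Hh]. now exists h.
    - exists (fun _ => 0). tauto. }
  destruct (exact_interp_of_approx (L + theta) (2 * theta) ltac:(lra) ltac:(lra)
              (fun h => T_little_c0 J h Hcpt HJ) A HA alpha Halpha0 Halpha1) as [F [HF0 [HF HT]]].
  exists F. split; [exact HF0|split; [|exact HT]].
  apply lipnorm_le_iff. eapply lipschitz_with_le; [|exact HF].
  apply Rle_div_l; lra.
Qed.

End FixedLowerBound.

Lemma c0_lip_interpolating_iff M : 1 <= M ->
  ((forall a, in_c0 a -> exists f, lip0 d x0 f /\ T f = a) /\ is_inf c0_lip_interp_bound M) <->
  is_inf c0_Lip_interp_bound M.
Proof.
  intros HM.
  assert (Hsub : forall K, c0_lip_interp_bound K -> c0_Lip_interp_bound K).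
  { intros K [HK Hinterp]. split; [exact HK|]. intros a Ha0 Ha1.
    destruct (Hinterp a Ha0 Ha1) as [f [[Hf _] Hf']]. now exists f. }
  assert (Hdense : forall K K', c0_Lip_interp_bound K -> K < K' -> c0_lip_interp_bound K').
  { intros K K' HK HKK'. apply (S_lower_bound_c0_lip_interp (/ K)).
    - apply c0_Lip_interp_bound_iff_S_lower_bound; [apply HK|exact HK].
    - now rewrite Rinv_inv. }
  rewrite <- (is_inf_dense_subset _ _ M Hsub Hdense).
  split; [tauto|]. intros Hinf. split; [|exact Hinf].
  apply interp_of_unit_ball; [| |apply c0_bounded|].
  - intros c a Ha. unfold in_c0. replace (Finite 0) with (Rbar_mult c 0) by (simpl; f_equal; ring).
    now apply is_lim_seq_scal_l.
  - intros c f. apply lip0_scale.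
  - destruct (Hdense M (M + 1)) as [_ Hinterp]; [|lra|].
    + apply c0_Lip_interp_bound_inf_attained; [lra|]. now apply (is_inf_dense_subset _ _ M Hsub Hdense).
    + intros a Ha0 Ha1. destruct (Hinterp a Ha0 Ha1) as [f [Hf [_ HT]]]. now exists f.
Qed.

End Interpolation.

End Pairs.
End Metric.

Theorem theorem4p6 (X : Type) (d : X -> X -> R) (x0 : X)
  (Hd : is_metric d) (Hcpt : mcompact d) (Hsep : separates_uniformly d x0)
  (xs ys : nat -> X)
  (Hne : forall n, xs n <> ys n)
  (Hdist : forall n m, n <> m -> (xs n, ys n) <> (xs m, ys m))
  (M : R) (HM : 1 <= M) :
  let T := Tinterp d xs ys in
  let cond_i :=
    (forall a, in_linf a -> exists f, Lip0 d x0 f /\ T f = a) /\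
    is_inf (fun K => 1 <= K /\ forall a, in_linf a -> sup_le1 a ->
              exists f, Lip0 d x0 f /\ lipnorm_le d f K /\ T f = a) M in
  let cond_ii :=
    (exists J, 0 < J /\ forall lam, in_l1 lam ->
        Rbar_le (J * l1norm lam) (dual_norm d x0 (S_op d xs ys lam))) /\
    is_max (fun J => 0 < J /\ forall lam, in_l1 lam ->
        Rbar_le (J * l1norm lam) (dual_norm d x0 (S_op d xs ys lam))) (/ M) in
  let cond_iii :=
    (forall a, in_c0 a -> exists f, lip0 d x0 f /\ T f = a) /\
    is_inf (fun K => 0 < K /\ forall a, in_c0 a -> sup_le1 a ->
              exists f, lip0 d x0 f /\ lipnorm_le d f K /\ T f = a) M in
  let cond_iv :=
    is_inf (fun K => 0 < K /\ forall a, in_c0 a -> sup_le1 a ->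
              exists f, Lip0 d x0 f /\ lipnorm_le d f K /\ T f = a) M in
  (cond_i <-> cond_ii) /\ (cond_ii <-> cond_iii) /\ (cond_iii <-> cond_iv).
Proof.
  intros T cond_i cond_ii cond_iii cond_iv.
  destruct Hsep as [sep [Hsep1 Hsep_f]].
  pose proof (linf_interpolating_iff X d x0 Hd xs ys Hne M HM) as Hi.
  pose proof (S_embedding_iff X d x0 Hd xs ys Hne M HM) as Hii.
  pose proof (c0_lip_interpolating_iff X d x0 Hd xs ys Hne sep Hsep1 Hsep_f Hcpt M HM) as Hiii.
  change (cond_i <-> cond_iv) in Hi.
  change (cond_ii <-> cond_iv) in Hii.
  change (cond_iii <-> cond_iv) in Hiii.
  tauto.
Qed.
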